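(* Let $f_1,\dots,f_n:\mathbb{R}^d\to\mathbb{R}$ be convex functions all of whose subgradients have Euclidean norm at most $L$, let $\Omega\subseteq\mathbb{R}^d$ be a closed convex set of diameter at most $D$, let $F(x)=\frac1n\sum_{i=1}^n f_i(x)$, $F^*=\min_{x\in\Omega}F(x)$, and let $x^*\in\arg\min_{x\in\Omega}F(x)$. Let $W$ be an $n\times n$ nonnegative doubly stochastic matrix with positive diagonal whose positive entries define a strongly connected directed graph, and let $\sigma<1$ be its second-largest singular value. Let the step-size $(\alpha(t))_{t\ge1}$ be positive and nonincreasing with $\sum_t\alpha(t)=+\infty$, $\sum_t\alpha^2(t)<\infty$, and suppose there are constants $C_\alpha, C_\alpha'$ with $\sum_{k=1}^t\alpha(k)\le C_\alpha\sum_{k=\lceil t/2\rceil}^t\alpha(k)$ and $\alpha(\lfloor t/2\rfloor)\le C_\alpha'\alpha(t)$ for all positive integers $t$. Let $\alpha_{\max}=\max_t\alpha(t)$. Consider the iteration $$x(t+1)=W\,P_\Omega\big[x(t)-\alpha(t)g(t)\big],\quad t\ge1,$$ where $x(t)$ is $n\times d$ with rows $x_i(t)$, all rows of $x(1)$ equal to a common point of $\Omega$, $g(t)$ has rows $g_i(t)$ with $g_i(t)$ a subgradient of $f_i$ at $x_i(t)$, and $P_\Omega$ acts row-wise as Euclidean projection onto $\Omega$. Let $\overline{x}(t)=\frac1n\sum_i x_i(t)$, $t'=\lfloor t/2\rfloor$, and $x'_\alpha(t)=\frac{\sum_{k=t'}^t\alpha(k)\overline{x}(k)}{\sum_{k=t'}^t\alpha(k)}$.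 Then there is an absolute constant $c>0$ such that, whenever $t$ satisfies $$\sum_{k=\lfloor t/2\rfloor}^{\infty}\alpha^2(k)\le\frac{D^2(1-\sigma)}{10C_\alpha'L^2}\quad\text{and}\quad t\ge\frac{c}{1-\sigma}\log\Big[\frac{(1-\sigma)\,t\,\alpha_{\max}}{C_\alpha'\alpha(t)}\Big],$$ we have $$F(x'_\alpha(t))-F^*\le\frac{D^2C_\alpha}{\sum_{k=1}^t\alpha(k)}.$$ Moreover, if $\alpha(t)=1/t^\beta$ with $\beta\in(1/2,1)$, there are constants $c_\beta, C_\beta>0$ depending only on $\beta$ such that whenever $t$ satisfies the second (logarithmic) condition above and additionally $t^{2\beta-1}\ge c_\beta\frac{L^2}{D^2(1-\sigma)}$, we have $F(x'_\alpha(t))-F^*\le C_\beta\frac{D^2}{t^{1-\beta}}$.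
   Context: $P_\Omega$ denotes Euclidean projection onto $\Omega$. The second-largest singular value $\sigma$ of $W$ satisfies $\sigma<1$ under the stated assumptions on $W$ (the largest singular value is $1$, attained at the all-ones vector). *)

(* Stdlib (classical reals). Vectors of R^d are functions nat -> R that
   vanish at coordinates >= d (predicate inRd); matrices are nat -> nat -> R
   with indices < n. *)
From Stdlib Require Import Reals Lra Lia.
Open Scope R_scope.

Definition vec := nat -> R.

Fixpoint rsum (f : nat -> R) (m : nat) : R :=
  match m with O => 0 | S m' => rsum f m' + f m' end.

(* rsum_ft a b f = sum_{k=a}^{b} f k  (empty if b < a) *)
Definition rsum_ft (a b : nat) (f : nat -> R) : R :=
  rsum (fun k => f (a + k)%nat) (S b - a).

Definition inRd (d : nat) (x : vec) : Prop := forall k, (d <= k)%nat -> x k = 0.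
Definition dot (d : nat) (x y : vec) : R := rsum (fun k => x k * y k) d.
Definition norm (d : nat) (x : vec) : R := sqrt (dot d x x).
Definition vsub (x y : vec) : vec := fun k => x k - y k.

Definition subset_Rd (d : nat) (Om : vec -> Prop) : Prop := forall x, Om x -> inRd d x.
Definition convex_set (d : nat) (Om : vec -> Prop) : Prop :=
  forall x y l, Om x -> Om y -> 0 <= l <= 1 -> Om (fun k => l * x k + (1 - l) * y k).
Definition closed_set (d : nat) (Om : vec -> Prop) : Prop :=
  forall x, inRd d x ->
    (forall eps, 0 < eps -> exists y, Om y /\ norm d (vsub x y) < eps) -> Om x.
Definition diam_le (d : nat) (Om : vec -> Prop) (D : R) : Prop :=
  forall x y, Om x -> Om y -> norm d (vsub x y) <= D.

Definition convex_fun (d : nat) (f : vec -> R) : Prop :=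
  forall x y l, inRd d x -> inRd d y -> 0 <= l <= 1 ->
    f (fun k => l * x k + (1 - l) * y k) <= l * f x + (1 - l) * f y.
Definition is_subgrad (d : nat) (f : vec -> R) (x g : vec) : Prop :=
  inRd d g /\ forall y, inRd d y -> f y >= f x + dot d g (vsub y x).
Definition subgrad_bounded (d : nat) (f : vec -> R) (L : R) : Prop :=
  forall x g, inRd d x -> is_subgrad d f x g -> norm d g <= L.
Definition is_proj (d : nat) (Om : vec -> Prop) (z p : vec) : Prop :=
  Om p /\ forall q, Om q -> norm d (vsub z p) <= norm d (vsub z q).

Definition Favg (n : nat) (f : nat -> vec -> R) (x : vec) : R :=
  / INR n * rsum (fun i => f i x) n.

Definition doubly_stochastic (n : nat) (W : nat -> nat -> R) : Prop :=
  (forall i j, (i < n)%nat -> (j < n)%nat -> 0 <= W i j) /\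
  (forall i, (i < n)%nat -> rsum (fun j => W i j) n = 1) /\
  (forall j, (j < n)%nat -> rsum (fun i => W i j) n = 1).

Inductive reach (n : nat) (W : nat -> nat -> R) (i : nat) : nat -> Prop :=
  | reach_refl : reach n W i i
  | reach_step : forall j k, reach n W i j -> (k < n)%nat -> 0 < W j k -> reach n W i k.

Definition strongly_connected (n : nat) (W : nat -> nat -> R) : Prop :=
  forall i j, (i < n)%nat -> (j < n)%nat -> reach n W i j.

Definition orthogonal_mx (n : nat) (U : nat -> nat -> R) : Prop :=
  forall i j, (i < n)%nat -> (j < n)%nat ->
    rsum (fun k => U k i * U k j) n = if Nat.eq_dec i j then 1 else 0.

Definition is_svd (n : nat) (W U : nat -> nat -> R) (s : nat -> R) (V : nat -> nat -> R) : Prop :=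
  orthogonal_mx n U /\ orthogonal_mx n V /\
  (forall k, (k < n)%nat -> 0 <= s k) /\
  (forall k, (S k < n)%nat -> s (S k) <= s k) /\
  (forall i j, (i < n)%nat -> (j < n)%nat -> W i j = rsum (fun k => U i k * s k * V j k) n).

Definition second_singular_value (n : nat) (W : nat -> nat -> R) (sigma : R) : Prop :=
  (2 <= n)%nat /\ exists U s V, is_svd n W U s V /\ sigma = s 1%nat.

Definition stepsize_ok (alpha : nat -> R) : Prop :=
  (forall t, (1 <= t)%nat -> 0 < alpha t) /\
  (forall t, (1 <= t)%nat -> alpha (S t) <= alpha t) /\
  (forall M, exists N, M < rsum_ft 1 N alpha) /\
  (exists l, Un_cv (fun N => rsum_ft 1 N (fun k => alpha k ^ 2)) l).

Definition is_max_step (alpha : nat -> R) (amax : R) : Prop :=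
  (forall t, (1 <= t)%nat -> alpha t <= amax) /\ exists t, (1 <= t)%nat /\ alpha t = amax.

Definition tail_sq (alpha : nat -> R) (a : nat) (S : R) : Prop :=
  Un_cv (fun N => rsum_ft a (a + N) (fun k => alpha k ^ 2)) S.

(* x t i = x_i(t), g t i = g_i(t), P t j = P_Om[x_j(t) - alpha(t) g_j(t)] *)
Definition dsgd_run (n d : nat) (f : nat -> vec -> R) (Om : vec -> Prop)
  (W : nat -> nat -> R) (alpha : nat -> R) (x g P : nat -> nat -> vec) : Prop :=
  (exists x0, Om x0 /\ forall i k, (i < n)%nat -> x 1%nat i k = x0 k) /\
  (forall t i, (1 <= t)%nat -> (i < n)%nat -> is_subgrad d (f i) (x t i) (g t i)) /\
  (forall t j, (1 <= t)%nat -> (j < n)%nat ->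
     is_proj d Om (fun k => x t j k - alpha t * g t j k) (P t j)) /\
  (forall t i k, (1 <= t)%nat -> (i < n)%nat ->
     x (S t) i k = rsum (fun j => W i j * P t j k) n).

Definition xbar (n : nat) (x : nat -> nat -> vec) (t : nat) : vec :=
  fun k => / INR n * rsum (fun i => x t i k) n.

(* t' = floor(t/2), taken to be at least 1 since the sequences start at index 1 *)
Definition tprime (t : nat) : nat := Nat.max 1 (t / 2).

Definition xprime (n : nat) (alpha : nat -> R) (x : nat -> nat -> vec) (t : nat) : vec :=
  fun k => rsum_ft (tprime t) t (fun s => alpha s * xbar n x s k)
           / rsum_ft (tprime t) t alpha.

Definition standing (n d : nat) (f : nat -> vec -> R) (L : R) (Om : vec -> Prop) (D : R)
  (xstar : vec) (W : nat -> nat -> R) (sigma : R) : Prop :=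
  (forall i, (i < n)%nat -> convex_fun d (f i) /\ subgrad_bounded d (f i) L) /\
  subset_Rd d Om /\ convex_set d Om /\ closed_set d Om /\ diam_le d Om D /\
  Om xstar /\ (forall y, Om y -> Favg n f xstar <= Favg n f y) /\
  doubly_stochastic n W /\ (forall i, (i < n)%nat -> 0 < W i i) /\
  strongly_connected n W /\
  second_singular_value n W sigma /\ sigma < 1.

(** Projected subgradient steps keep every node in [Om], and mixing by the doubly stochastic
    [W] does not increase [sum_i |x_i - xstar|^2]; so this potential drops by
    [2 n alpha(t) (F(xbar t) - F(xstar))] up to an [n alpha(t)^2 L^2] term and a term
    [2 alpha(t) L sum_i |x_i - xbar|] paid for evaluating the f_i away from the average.
    Mixing contracts deviations from the average by the second singular value [sigma], so the
    root disagreement [q] obeys [q(t+1) <= sigma (q(t) + sqrt n alpha(t) L)]; on the window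
    [[t', t]] the logarithmic condition on [t] has damped the start-up transient, leaving
    [q(k) = O(sqrt n L C'_alpha alpha(k) / (1 - sigma))]. Summing the descent inequality over the
    window, telescoping, and applying Jensen's inequality to [x'_alpha(t)] gives
    [sum_k alpha(k) (F(x'_alpha t) - F(xstar)) <= D^2/2 + O(L^2 / (1 - sigma)) sum_k alpha(k)^2],
    and both rates follow from bounds on the two window sums. *)

From Stdlib Require Import Reals Lra Lia Psatz FunctionalExtensionality.
Open Scope R_scope.

Lemma rsum_ext f g m : (forall i, (i < m)%nat -> f i = g i) -> rsum f m = rsum g m.
Proof.
  induction m; intros H; simpl; auto.
  rewrite IHm by (intros; apply H; lia). rewrite H by lia. reflexivity.
Qed.

Lemma rsum_add f g m : rsum (fun i => f i + g i) m = rsum f m + rsum g m.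
Proof. induction m; simpl; [lra|]. rewrite IHm. lra. Qed.

Lemma rsum_sub f g m : rsum (fun i => f i - g i) m = rsum f m - rsum g m.
Proof. induction m; simpl; [lra|]. rewrite IHm. lra. Qed.

Lemma rsum_scal_l c f m : rsum (fun i => c * f i) m = c * rsum f m.
Proof. induction m; simpl; [lra|]. rewrite IHm. lra. Qed.

Lemma rsum_scal_r c f m : rsum (fun i => f i * c) m = rsum f m * c.
Proof. induction m; simpl; [lra|]. rewrite IHm. lra. Qed.

Lemma rsum_const c m : rsum (fun _ => c) m = INR m * c.
Proof. induction m; simpl rsum; [simpl; lra|]. rewrite IHm, S_INR. lra. Qed.

Lemma rsum_zero m : rsum (fun _ => 0) m = 0.
Proof. rewrite rsum_const. lra. Qed.

Lemma rsum_le f g m : (forall i, (i < m)%nat -> f i <= g i) -> rsum f m <= rsum g m.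
Proof.
  induction m; intros H; simpl; [lra|].
  assert (rsum f m <= rsum g m) by (apply IHm; intros; apply H; lia).
  specialize (H m ltac:(lia)). lra.
Qed.

Lemma rsum_nonneg f m : (forall i, (i < m)%nat -> 0 <= f i) -> 0 <= rsum f m.
Proof. intros H. rewrite <- (rsum_zero m). apply rsum_le. auto. Qed.

Lemma rsum_swap (f : nat -> nat -> R) m p :
  rsum (fun i => rsum (fun j => f i j) p) m = rsum (fun j => rsum (fun i => f i j) m) p.
Proof.
  induction m; simpl.
  - symmetry. apply rsum_zero.
  - rewrite IHm. rewrite <- rsum_add. reflexivity.
Qed.

Lemma rsum_shift f m : rsum f (S m) = f 0%nat + rsum (fun k => f (S k)) m.
Proof. induction m; simpl in *; [lra|]. rewrite IHm. lra. Qed.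

Lemma rsum_shift_pos f m : (0 < m)%nat -> rsum f m = f 0%nat + rsum (fun k => f (S k)) (pred m).
Proof. intros. destruct m; [lia|]. apply rsum_shift. Qed.

Lemma rsum_nonneg_le0_eq0 f m : (forall i, (i < m)%nat -> 0 <= f i) -> rsum f m <= 0 ->
  forall i, (i < m)%nat -> f i = 0.
Proof.
  induction m; intros H Hs i Hi; [lia|].
  simpl in Hs.
  assert (0 <= rsum f m) by (apply rsum_nonneg; intros; apply H; lia).
  assert (0 <= f m) by (apply H; lia).
  destruct (Nat.eq_dec i m).
  - subst. lra.
  - apply IHm; [intros; apply H; lia | lra | lia].
Qed.

Lemma rsum_kronecker_l (a : nat -> R) k m : (k < m)%nat ->
  rsum (fun l => a l * (if Nat.eq_dec k l then 1 else 0)) m = a k.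
Proof.
  induction m; intros Hk; [lia|]. simpl.
  destruct (Nat.eq_dec k m).
  - subst. rewrite (rsum_ext _ (fun _ => 0)). rewrite rsum_zero. lra.
    intros i Hi. destruct (Nat.eq_dec m i); [lia|lra].
  - rewrite IHm by lia. lra.
Qed.

Lemma rsum_kronecker_r (a : nat -> R) k m : (k < m)%nat ->
  rsum (fun l => a l * (if Nat.eq_dec l k then 1 else 0)) m = a k.
Proof.
  intros. rewrite <- (rsum_kronecker_l a k m) by auto. apply rsum_ext. intros.
  destruct (Nat.eq_dec i k), (Nat.eq_dec k i); try lia; lra.
Qed.

Lemma rsum_telescope (V : nat -> R) a N :
  rsum (fun i => V (a + i)%nat - V (S (a + i))) N = V a - V (a + N)%nat.
Proof.
  induction N; simpl.
  - rewrite Nat.add_0_r. ring.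
  - rewrite IHN. replace (a + S N)%nat with (S (a + N)) by lia. ring.
Qed.

Lemma mean_minimizes_sq_dev (p : nat -> R) c m : 0 < INR m ->
  rsum (fun j => (p j - / INR m * rsum p m) ^ 2) m <= rsum (fun j => (p j - c) ^ 2) m.
Proof.
  intros Hm. set (pb := / INR m * rsum p m).
  rewrite (rsum_ext (fun j => (p j - c) ^ 2)
    (fun j => (p j - pb) ^ 2 + (2 * (pb - c)) * (p j - pb) + (pb - c) ^ 2)) by (intros; ring).
  rewrite !rsum_add, rsum_scal_l, rsum_sub, !rsum_const.
  assert (E : rsum p m - INR m * pb = 0) by (unfold pb; field; lra).
  rewrite E. assert (0 <= (pb - c) ^ 2) by apply pow2_ge_0.
  assert (0 <= INR m * (pb - c) ^ 2) by (apply Rmult_le_pos; lra). lra.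
Qed.

Lemma rsum_cauchy_schwarz (a b : nat -> R) m :
  (rsum (fun i => a i * b i) m) ^ 2 <= rsum (fun i => a i ^ 2) m * rsum (fun i => b i ^ 2) m.
Proof.
  set (A := rsum (fun i => a i ^ 2) m).
  set (B := rsum (fun i => b i ^ 2) m).
  set (C := rsum (fun i => a i * b i) m).
  assert (Hq : forall l, 0 <= A - 2 * l * C + l ^ 2 * B).
  { intros l.
    assert (E : rsum (fun i => (a i - l * b i) ^ 2) m = A - 2 * l * C + l ^ 2 * B).
    { unfold A, B, C. rewrite <- rsum_scal_l, <- rsum_scal_l, <- rsum_sub, <- rsum_add.
      apply rsum_ext. intros. ring. }
    rewrite <- E. apply rsum_nonneg. intros. apply pow2_ge_0. }
  assert (HA : 0 <= A) by (apply rsum_nonneg; intros; apply pow2_ge_0).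
  assert (HB : 0 <= B) by (apply rsum_nonneg; intros; apply pow2_ge_0).
  destruct (Req_dec B 0) as [HB0|HB0].
  - destruct (Req_dec C 0) as [HC|HC].
    + rewrite HC, HB0. lra.
    + exfalso. specialize (Hq ((A + 1) / (2 * C))).
      rewrite HB0 in Hq.
      assert (E : 2 * ((A + 1) / (2 * C)) * C = A + 1) by (field; auto).
      rewrite E in Hq. lra.
  - specialize (Hq (C / B)).
    assert (0 < B) by lra.
    assert (E : A - 2 * (C / B) * C + (C / B) ^ 2 * B = (A * B - C ^ 2) / B) by (field; lra).
    rewrite E in Hq.
    assert (0 <= A * B - C ^ 2).
    { replace (A * B - C ^ 2) with ((A * B - C ^ 2) / B * B) by (field; lra).
      apply Rmult_le_pos; lra. }
    lra.
Qed.

Lemma rsum_cauchy_schwarz_sqrt (a b : nat -> R) m :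
  rsum (fun i => a i * b i) m <=
  sqrt (rsum (fun i => a i ^ 2) m) * sqrt (rsum (fun i => b i ^ 2) m).
Proof.
  assert (HA : 0 <= rsum (fun i => a i ^ 2) m) by (apply rsum_nonneg; intros; apply pow2_ge_0).
  assert (HB : 0 <= rsum (fun i => b i ^ 2) m) by (apply rsum_nonneg; intros; apply pow2_ge_0).
  rewrite <- sqrt_mult by auto.
  set (C := rsum (fun i => a i * b i) m).
  apply Rle_trans with (Rabs C); [apply RRle_abs|].
  rewrite <- (sqrt_pow2 (Rabs C)) by apply Rabs_pos.
  apply sqrt_le_1_alt. rewrite pow2_abs. apply rsum_cauchy_schwarz.
Qed.

Lemma rsum_minkowski (a b : nat -> R) m :
  sqrt (rsum (fun i => (a i + b i) ^ 2) m) <=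
  sqrt (rsum (fun i => a i ^ 2) m) + sqrt (rsum (fun i => b i ^ 2) m).
Proof.
  assert (HA : 0 <= rsum (fun i => a i ^ 2) m) by (apply rsum_nonneg; intros; apply pow2_ge_0).
  assert (HB : 0 <= rsum (fun i => b i ^ 2) m) by (apply rsum_nonneg; intros; apply pow2_ge_0).
  assert (HC := rsum_cauchy_schwarz_sqrt a b m).
  set (sa := sqrt (rsum (fun i => a i ^ 2) m)) in *.
  set (sb := sqrt (rsum (fun i => b i ^ 2) m)) in *.
  assert (Ha : sa * sa = rsum (fun i => a i ^ 2) m) by (apply sqrt_sqrt; auto).
  assert (Hb : sb * sb = rsum (fun i => b i ^ 2) m) by (apply sqrt_sqrt; auto).
  assert (0 <= sa) by apply sqrt_pos. assert (0 <= sb) by apply sqrt_pos.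
  rewrite <- (sqrt_pow2 (sa + sb)) by lra.
  apply sqrt_le_1_alt.
  replace (rsum (fun i => (a i + b i) ^ 2) m) with
    (rsum (fun i => a i ^ 2) m + 2 * rsum (fun i => a i * b i) m + rsum (fun i => b i ^ 2) m).
  - nra.
  - rewrite <- rsum_scal_l, <- !rsum_add. apply rsum_ext. intros. ring.
Qed.

Lemma rsum_weighted_cauchy_schwarz (w v : nat -> R) m : (forall i, (i < m)%nat -> 0 <= w i) ->
  (rsum (fun i => w i * v i) m) ^ 2 <= rsum w m * rsum (fun i => w i * v i ^ 2) m.
Proof.
  intros Hw.
  assert (H := rsum_cauchy_schwarz (fun i => sqrt (w i) * v i) (fun i => sqrt (w i)) m).
  simpl in H.
  rewrite (rsum_ext _ (fun i => w i * v i)) in H.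
  2:{ intros i Hi. specialize (Hw i Hi). assert (E := sqrt_sqrt _ Hw).
        transitivity (sqrt (w i) * sqrt (w i) * v i); [ring | rewrite E; ring]. }
  rewrite (rsum_ext (fun i => (sqrt (w i) * v i) ^ 2) (fun i => w i * v i ^ 2)) in H.
  2:{ intros i Hi. specialize (Hw i Hi). assert (E := sqrt_sqrt _ Hw).
        transitivity (sqrt (w i) * sqrt (w i) * v i ^ 2); [ring | rewrite E; ring]. }
  rewrite (rsum_ext (fun i => sqrt (w i) ^ 2) w) in H.
  2:{ intros i Hi. specialize (Hw i Hi). assert (E := sqrt_sqrt _ Hw).
        transitivity (sqrt (w i) * sqrt (w i)); [ring | rewrite E; ring]. }
  lra.
Qed.

Lemma Rdiv_le_cross X Y u s : 0 < u -> 0 < s -> s * X <= u * Y -> X / u <= Y / s.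
Proof.
  intros Hu Hs H.
  assert (E1 : X / u = (s * X) / (u * s)) by (field; lra).
  assert (E2 : Y / s = (u * Y) / (u * s)) by (field; lra).
  rewrite E1, E2. unfold Rdiv. apply Rmult_le_compat_r; auto.
  left. apply Rinv_0_lt_compat. nra.
Qed.

Lemma le_div_of_mul_le Q q G X : 0 < q <= Q -> 0 <= X -> Q * G <= X -> G <= X / q.
Proof.
  intros [Hq HqQ] HX H.
  apply Rmult_le_reg_l with q; [lra|].
  replace (q * (X / q)) with X by (field; lra).
  destruct (Rle_dec G 0); nra.
Qed.

Lemma pow_le_one s m : 0 <= s <= 1 -> s ^ m <= 1.
Proof. intros Hs. induction m; simpl; [lra|]. assert (0 <= s ^ m) by (apply pow_le; lra). nra. Qed.

Lemma exp_le_compat a b : a <= b -> exp a <= exp b.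
Proof. intros H. destruct (Rle_lt_or_eq_dec _ _ H); [left; apply exp_increasing; auto| subst; lra]. Qed.

Lemma pow_le_exp s m : 0 <= s -> s ^ m <= exp (- (1 - s) * INR m).
Proof.
  intros Hs. induction m.
  - simpl. rewrite Rmult_0_r, exp_0. lra.
  - rewrite S_INR. replace (- (1 - s) * (INR m + 1)) with ((s - 1) + - (1 - s) * INR m) by ring.
    rewrite exp_plus. simpl. apply Rmult_le_compat; auto.
    + apply pow_le; auto.
    + assert (H := exp_ineq1_le (s - 1)). lra.
Qed.

Lemma ln_le_compat x y : 0 < x -> x <= y -> ln x <= ln y.
Proof. intros Hx H. destruct (Rle_lt_or_eq_dec _ _ H); [left; apply ln_increasing; auto| subst; lra]. Qed.

Lemma Rpower_pos x y : 0 < Rpower x y.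
Proof. unfold Rpower. apply exp_pos. Qed.

Lemma Rpower_le_base_nonpos x y e : 0 < x -> x <= y -> e <= 0 -> Rpower y e <= Rpower x e.
Proof.
  intros Hx Hxy He. unfold Rpower. apply exp_le_compat.
  assert (ln x <= ln y) by (apply ln_le_compat; auto). nra.
Qed.

Lemma Rpower_decrement_ge g y : 1 < g -> 0 < y ->
  (g - 1) * / Rpower (y + 1) g <= Rpower y (1 - g) - Rpower (y + 1) (1 - g).
Proof.
  intros Hg Hy.
  destruct (MVT_cor2 (fun z => Rpower z (1 - g)) (fun z => (1 - g) * Rpower z (1 - g - 1)) y (y + 1))
    as [c [Hc1 Hc2]]; [lra| |].
  { intros c Hc. apply derivable_pt_lim_power. lra. }
  replace (1 - g - 1) with (- g) in Hc1 by ring. rewrite Rpower_Ropp in Hc1.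
  assert (Hcc : Rpower c g <= Rpower (y + 1) g) by (apply Rle_Rpower_l; lra).
  assert (0 < Rpower c g) by apply Rpower_pos.
  assert (/ Rpower (y + 1) g <= / Rpower c g) by (apply Rinv_le_contravar; auto).
  replace (y + 1 - y) with 1 in Hc1 by ring. nra.
Qed.

Lemma rsum_inv_Rpower_le g a m : 1 < g -> (1 <= a)%nat ->
  rsum (fun i => / Rpower (INR (a + 1 + i)) g) m <=
  (Rpower (INR a) (1 - g) - Rpower (INR (a + m)) (1 - g)) / (g - 1).
Proof.
  intros Hg Ha. induction m.
  - simpl. rewrite Nat.add_0_r. right. field. lra.
  - simpl rsum.
    assert (Hy : 0 < INR (a + m)) by (apply lt_0_INR; lia).
    assert (Hs := Rpower_decrement_ge g (INR (a + m)) Hg Hy).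
    replace (INR (a + m) + 1) with (INR (a + 1 + m)) in Hs by (rewrite <- S_INR; f_equal; lia).
    replace (a + S m)%nat with (a + 1 + m)%nat by lia.
    assert (E : (Rpower (INR a) (1 - g) - Rpower (INR (a + 1 + m)) (1 - g)) / (g - 1) =
      (Rpower (INR a) (1 - g) - Rpower (INR (a + m)) (1 - g)) / (g - 1) +
      (Rpower (INR (a + m)) (1 - g) - Rpower (INR (a + 1 + m)) (1 - g)) / (g - 1)) by (field; lra).
    rewrite E. apply Rplus_le_compat; auto.
    apply Rmult_le_reg_l with (g - 1); [lra|].
    replace ((g - 1) * ((Rpower (INR (a + m)) (1 - g) - Rpower (INR (a + 1 + m)) (1 - g)) / (g - 1)))
      with (Rpower (INR (a + m)) (1 - g) - Rpower (INR (a + 1 + m)) (1 - g)) by (field; lra).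
    exact Hs.
Qed.

Lemma dot_nonneg d x : 0 <= dot d x x.
Proof. unfold dot. apply rsum_nonneg. intros. apply Rle_0_sqr. Qed.

Lemma norm_nonneg d x : 0 <= norm d x.
Proof. apply sqrt_pos. Qed.

Lemma norm_sq d x : norm d x ^ 2 = dot d x x.
Proof. unfold norm. apply pow2_sqrt. apply dot_nonneg. Qed.

Lemma norm_le_of_dot_le d x y : dot d x x <= dot d y y -> norm d x <= norm d y.
Proof. intros. unfold norm. apply sqrt_le_1_alt. auto. Qed.

Lemma dot_le_of_norm_le d x y : norm d x <= norm d y -> dot d x x <= dot d y y.
Proof.
  intros H. rewrite <- (norm_sq d x), <- (norm_sq d y).
  assert (0 <= norm d x) by apply norm_nonneg. nra.
Qed.

Lemma dot_self_sum d x : dot d x x = rsum (fun k => x k ^ 2) d.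
Proof. unfold dot. apply rsum_ext. intros. ring. Qed.

Lemma dot_cauchy_schwarz d x y : dot d x y <= norm d x * norm d y.
Proof.
  unfold norm. rewrite !dot_self_sum. apply rsum_cauchy_schwarz_sqrt.
Qed.

Lemma norm_triangle d x y : norm d (fun k => x k + y k) <= norm d x + norm d y.
Proof. unfold norm. rewrite !dot_self_sum. apply (rsum_minkowski x y). Qed.

Lemma norm_scal d c x : norm d (fun k => c * x k) = Rabs c * norm d x.
Proof.
  unfold norm. rewrite <- (sqrt_pow2 (Rabs c)) by apply Rabs_pos.
  rewrite <- sqrt_mult by (try apply pow2_ge_0; apply dot_nonneg).
  f_equal. unfold dot. rewrite <- rsum_scal_l. apply rsum_ext. intros.
  rewrite pow2_abs. ring.
Qed.

Lemma norm_ext d x y : (forall k, (k < d)%nat -> x k = y k) -> norm d x = norm d y.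
Proof. intros H. unfold norm, dot. f_equal. apply rsum_ext. intros. rewrite H; auto. Qed.

Lemma dist_sym d x y : norm d (vsub x y) = norm d (vsub y x).
Proof.
  rewrite <- (Rmult_1_l (norm d (vsub y x))).
  replace 1 with (Rabs (-1)) at 1 by (unfold Rabs; destruct Rcase_abs; lra).
  rewrite <- norm_scal. apply norm_ext. intros. unfold vsub. ring.
Qed.

Lemma dist_triangle d x y z : norm d (vsub x z) <= norm d (vsub x y) + norm d (vsub y z).
Proof.
  rewrite (norm_ext d (vsub x z) (fun k => vsub x y k + vsub y z k)).
  apply norm_triangle. intros. unfold vsub. ring.
Qed.

Definition unit_vec (m : nat) : vec := fun k => if Nat.eq_dec k m then 1 else 0.

Lemma dot_linear_r d g a b v v' :
  dot d g (fun k => a * v k + b * v' k) = a * dot d g v + b * dot d g v'.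
Proof.
  unfold dot. rewrite <- !rsum_scal_l, <- rsum_add. apply rsum_ext. intros. ring.
Qed.

Lemma real_separation (E F : R -> Prop) : (exists r, E r) -> (exists r, F r) ->
  (forall r r', E r -> F r' -> r <= r') ->
  exists c, (forall r, E r -> r <= c) /\ (forall r', F r' -> c <= r').
Proof.
  intros HE [r' Hr'] Hsep.
  destruct (completeness E (ex_intro _ r' (fun r Hr => Hsep r r' Hr Hr')) HE) as [c [Hub Hlub]].
  exists c. split; [exact Hub|]. intros y Hy. apply Hlub. intros r Hr. apply Hsep; auto.
Qed.

Lemma dot_update_coord d m (g v : vec) c : (m < d)%nat ->
  dot d (fun k => if Nat.eq_dec k m then c else g k) v =
  dot d g (fun k => if Nat.eq_dec k m then 0 else v k) + c * v m.
Proof.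
  intros Hm. unfold dot.
  rewrite (rsum_ext _ (fun k => g k * (if Nat.eq_dec k m then 0 else v k) +
                               c * (v m * (if Nat.eq_dec k m then 1 else 0)))).
  - rewrite rsum_add, rsum_scal_l, (rsum_kronecker_r (fun _ => v m)) by exact Hm. reflexivity.
  - intros k Hk. destruct Nat.eq_dec; subst; ring.
Qed.

Section SubgradientExistence.
Variables (d : nat) (f : vec -> R) (z : vec).
Hypothesis (Hf : convex_fun d f) (Hz : inRd d z).

Lemma left_slope_le_right_slope m g : (m < d)%nat -> inRd m g ->
  (forall v, inRd m v -> f (fun k => z k + v k) >= f z + dot d g v) ->
  forall v v' u s, inRd m v -> inRd m v' -> 0 < u -> 0 < s ->
  (f z + dot d g v' - f (fun k => z k + v' k - u * unit_vec m k)) / u <=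
  (f (fun k => z k + v k + s * unit_vec m k) - f z - dot d g v) / s.
Proof.
  intros Hm Hg IH v v' u s Hv Hv' Hu Hs.
  set (l := u / (u + s)).
  assert (Hl : 0 <= l <= 1).
  { unfold l. split; [apply Rlt_le, Rdiv_lt_0_compat; lra|].
    apply Rmult_le_reg_r with (u + s); [lra|]. unfold Rdiv. rewrite Rmult_assoc, Rinv_l by lra. lra.
    }
  assert (HeR : inRd d (unit_vec m)) by (intros k Hk; unfold unit_vec; destruct Nat.eq_dec; lia || lra).
  assert (HA : inRd d (fun k => z k + v k + s * unit_vec m k)).
  { intros k Hk. rewrite Hz, (Hv k), HeR by lia. ring. }
  assert (HB : inRd d (fun k => z k + v' k - u * unit_vec m k)).
  { intros k Hk. rewrite Hz, (Hv' k), HeR by lia. ring. }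
  assert (Hc := Hf _ _ l HA HB Hl).
  set (w := fun k => (u / (u + s)) * v k + (s / (u + s)) * v' k).
  assert (Hw : inRd m w) by (intros k Hk; unfold w; rewrite Hv, Hv' by lia; ring).
  assert (Ept : (fun k => l * (z k + v k + s * unit_vec m k) + (1 - l) * (z k + v' k - u * unit_vec m k))
                = (fun k => z k + w k)).
  { apply functional_extensionality. intros k. unfold w, l. field. lra. }
  cbv beta in Hc. rewrite Ept in Hc. unfold w in Hc.
  specialize (IH w Hw). unfold w in IH. rewrite dot_linear_r in IH.
  set (fA := f (fun k => z k + v k + s * unit_vec m k)) in *.
  set (fB := f (fun k => z k + v' k - u * unit_vec m k)) in *.
  set (fw := f (fun k => z k + (u / (u + s) * v k + s / (u + s) * v' k))) in *.
  apply Rdiv_le_cross; auto.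
  assert (E1 : l = u / (u + s)) by reflexivity.
  assert (E2 : 1 - l = s / (u + s)) by (unfold l; field; lra).
  rewrite E2 in Hc. rewrite E1 in Hc.
  assert (H1 : (u + s) * fw <= u * fA + s * fB).
  { apply Rmult_le_reg_r with (/ (u + s)); [apply Rinv_0_lt_compat; lra|].
    replace ((u + s) * fw * / (u + s)) with fw by (field; lra).
    replace ((u * fA + s * fB) * / (u + s)) with (u / (u + s) * fA + s / (u + s) * fB) by (field; lra).
    lra. }
  assert (H2 : (u + s) * fw >= (u + s) * f z + u * dot d g v + s * dot d g v').
  { replace ((u + s) * f z + u * dot d g v + s * dot d g v') with
      ((u + s) * (f z + (u / (u + s) * dot d g v + s / (u + s) * dot d g v'))) by (field; lra).
    apply Rle_ge, Rmult_le_compat_l; lra. }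
  lra.
Qed.

Lemma partial_subgrad_extend m g : (m < d)%nat -> inRd m g ->
  (forall v, inRd m v -> f (fun k => z k + v k) >= f z + dot d g v) ->
  exists g', inRd (S m) g' /\
  (forall v, inRd (S m) v -> f (fun k => z k + v k) >= f z + dot d g' v).
Proof.
  intros Hm Hg IH.
  assert (H0 : inRd m (fun _ => 0)) by (intros k Hk; auto).
  (* The new coordinate [c] lies between all backward and all forward difference quotients
     of [f] along [unit_vec m]. *)
  destruct (real_separation
    (fun r => exists v' u, inRd m v' /\ 0 < u /\
       r = (f z + dot d g v' - f (fun k => z k + v' k - u * unit_vec m k)) / u)
    (fun r => exists v s, inRd m v /\ 0 < s /\
       r = (f (fun k => z k + v k + s * unit_vec m k) - f z - dot d g v) / s)) as [c [Hc1 Hc2]].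
  { eexists. exists (fun _ => 0), 1. split; [exact H0| split; [lra| reflexivity]]. }
  { eexists. exists (fun _ => 0), 1. split; [exact H0| split; [lra| reflexivity]]. }
  { intros r r' [v' [u [Hv' [Hu ->]]]] [v [s [Hv [Hs ->]]]].
    apply left_slope_le_right_slope; auto. }
  exists (fun k => if Nat.eq_dec k m then c else g k).
  split.
  { intros k Hk. destruct Nat.eq_dec; [lia|]. apply Hg. lia. }
  intros v Hv.
  set (v0 := fun k => if Nat.eq_dec k m then 0 else v k).
  assert (Hv0 : inRd m v0).
  { intros k Hk. unfold v0. destruct Nat.eq_dec; auto. apply Hv. lia. }
  rewrite dot_update_coord by exact Hm. fold v0.
  set (s := v m).
  destruct (Rtotal_order s 0) as [Hs|[Hs|Hs]].
  - set (u := - s).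
    assert (Ept : (fun k => z k + v k) = (fun k => z k + v0 k - u * unit_vec m k)).
    { apply functional_extensionality. intros k. unfold v0, u, s, unit_vec. destruct Nat.eq_dec; subst; ring. }
    rewrite Ept.
    assert (0 < u) by (unfold u; lra).
    specialize (Hc1 ((f z + dot d g v0 - f (fun k => z k + v0 k - u * unit_vec m k)) / u)
                  ltac:(exists v0, u; auto)).
    apply Rmult_le_compat_r with (r := u) in Hc1; [|lra].
    replace ((f z + dot d g v0 - f (fun k => z k + v0 k - u * unit_vec m k)) / u * u) with
      (f z + dot d g v0 - f (fun k => z k + v0 k - u * unit_vec m k)) in Hc1 by (field; lra).
    unfold u in *. lra.
  - assert (Ept : (fun k => z k + v k) = (fun k => z k + v0 k)).
    { apply functional_extensionality. intros k. unfold v0. destruct Nat.eq_dec; subst; auto.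
      fold s. rewrite Hs. ring. }
    rewrite Ept, Hs. specialize (IH v0 Hv0). lra.
  - assert (Ept : (fun k => z k + v k) = (fun k => z k + v0 k + s * unit_vec m k)).
    { apply functional_extensionality. intros k. unfold v0, s, unit_vec. destruct Nat.eq_dec; subst; ring. }
    rewrite Ept.
    assert (Hcm : c <= (f (fun k => z k + v0 k + s * unit_vec m k) - f z - dot d g v0) / s).
    { apply Hc2. exists v0, s; auto. }
    apply Rmult_le_compat_r with (r := s) in Hcm; [|lra].
    replace ((f (fun k => z k + v0 k + s * unit_vec m k) - f z - dot d g v0) / s * s) with
      (f (fun k => z k + v0 k + s * unit_vec m k) - f z - dot d g v0) in Hcm by (field; lra).
    lra.
Qed.

Lemma partial_subgrad_exists m : (m <= d)%nat -> exists g, inRd m g /\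
  (forall v, inRd m v -> f (fun k => z k + v k) >= f z + dot d g v).
Proof.
  induction m; intros Hm.
  - exists (fun _ => 0). split; [intros k _; auto|].
    intros v Hv.
    assert (E : (fun k => z k + v k) = z).
    { apply functional_extensionality. intros k. rewrite Hv by lia. ring. }
    rewrite E. unfold dot. rewrite (rsum_ext _ (fun _ => 0)) by (intros; ring).
    rewrite rsum_zero. lra.
  - destruct IHm as [g [Hg H]]; [lia|].
    apply (partial_subgrad_extend m g); auto; lia.
Qed.

Lemma subgrad_exists : exists g, is_subgrad d f z g.
Proof.
  destruct (partial_subgrad_exists d (le_n d)) as [g [Hg H]].
  exists g. split; auto.
  intros y Hy.
  assert (Hv : inRd d (vsub y z)) by (intros k Hk; unfold vsub; rewrite Hy, Hz by lia; ring).
  specialize (H _ Hv).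
  assert (E : (fun k => z k + vsub y z k) = y).
  { apply functional_extensionality. intros k. unfold vsub. ring. }
  rewrite E in H. auto.
Qed.

End SubgradientExistence.

Lemma convex_lipschitz d f L x y : convex_fun d f -> subgrad_bounded d f L -> inRd d x -> inRd d y ->
  f x - f y <= L * norm d (vsub x y).
Proof.
  intros Hf HL Hx Hy.
  destruct (subgrad_exists d f x Hf Hx) as [g Hg].
  assert (Hn := HL x g Hx Hg).
  destruct Hg as [Hgd Hg]. specialize (Hg y Hy).
  assert (E : dot d g (vsub y x) = - dot d g (vsub x y)).
  { unfold dot, vsub. replace (- rsum (fun k : nat => g k * (x k - y k)) d) with
      ((-1) * rsum (fun k : nat => g k * (x k - y k)) d) by ring. rewrite <- rsum_scal_l.
    apply rsum_ext. intros. ring. }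
  assert (Hcs := dot_cauchy_schwarz d g (vsub x y)).
  assert (0 <= norm d (vsub x y)) by apply norm_nonneg.
  assert (norm d g * norm d (vsub x y) <= L * norm d (vsub x y)) by (apply Rmult_le_compat_r; auto).
  lra.
Qed.

Lemma proj_dist_le d Om z p q : convex_set d Om -> is_proj d Om z p -> Om q ->
  norm d (vsub p q) <= norm d (vsub z q).
Proof.
  intros Hc [Hp Hmin] Hq.
  set (a := fun k => z k - p k). set (b := fun k => q k - p k).
  set (A := rsum (fun k => a k ^ 2) d). set (B := rsum (fun k => b k ^ 2) d).
  set (X := rsum (fun k => a k * b k) d).
  assert (HB : 0 <= B) by (apply rsum_nonneg; intros; apply pow2_ge_0).
  assert (Hl : forall l, 0 < l <= 1 -> 2 * X <= l * B).
  { intros l Hl.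
    assert (Hr : Om (fun k => l * q k + (1 - l) * p k)) by (apply Hc; auto; lra).
    specialize (Hmin _ Hr). apply dot_le_of_norm_le in Hmin. rewrite !dot_self_sum in Hmin.
    unfold vsub in Hmin.
    rewrite (rsum_ext (fun k => (z k - (l * q k + (1 - l) * p k)) ^ 2)
      (fun k => a k ^ 2 + (-2 * l) * (a k * b k) + l ^ 2 * b k ^ 2)) in Hmin
      by (intros; unfold a, b; ring).
    rewrite !rsum_add, !rsum_scal_l in Hmin. fold A B X in Hmin.
    assert (Ha : rsum (fun k => (z k - p k) ^ 2) d = A) by reflexivity. rewrite Ha in Hmin.
    assert (0 < l) by lra.
    apply Rmult_le_reg_l with l; [lra|]. nra. }
  assert (HX : X <= 0).
  { destruct (Rle_dec X 0) as [|Hn]; auto. exfalso.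
    assert (0 < X) by lra.
    specialize (Hl (X / (B + X))).
    assert (0 < X / (B + X) <= 1).
    { split; [apply Rdiv_lt_0_compat; lra|].
      apply Rmult_le_reg_r with (B + X); [lra|]. unfold Rdiv. rewrite Rmult_assoc, Rinv_l by lra.
      lra. }
    specialize (Hl H0).
    assert (X / (B + X) * B <= X).
    { apply Rmult_le_reg_r with (B + X); [lra|].
      replace (X / (B + X) * B * (B + X)) with (X * B) by (field; lra). nra. }
    lra. }
  apply norm_le_of_dot_le. rewrite !dot_self_sum. unfold vsub.
  rewrite (rsum_ext (fun k => (z k - q k) ^ 2) (fun k => a k ^ 2 + (-2) * (a k * b k) + b k ^ 2))
    by (intros; unfold a, b; ring).
  rewrite !rsum_add, rsum_scal_l. fold A X.
  rewrite (rsum_ext (fun k => (p k - q k) ^ 2) (fun k => b k ^ 2)) by (intros; unfold b; ring).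
  fold B.
  assert (0 <= A) by (apply rsum_nonneg; intros; apply pow2_ge_0). lra.
Qed.

Lemma inRd_weighted_avg d N (w : nat -> R) (y : nat -> vec) Wt :
  (forall i, (i < N)%nat -> inRd d (y i)) ->
  inRd d (fun k => rsum (fun i => w i * y i k) N / Wt).
Proof.
  intros H k Hk. rewrite (rsum_ext _ (fun _ => 0)). rewrite rsum_zero. unfold Rdiv. ring.
  intros i Hi. rewrite (H i Hi k Hk). ring.
Qed.

Lemma rsum_zero_weights (w : nat -> R) N (y : nat -> R) : (forall i, (i < N)%nat -> 0 <= w i) ->
  rsum w N = 0 -> rsum (fun i => w i * y i) N = 0.
Proof.
  intros Hw H0. rewrite (rsum_ext _ (fun _ => 0)). apply rsum_zero.
  intros i Hi. rewrite (rsum_nonneg_le0_eq0 w N Hw ltac:(lra) i Hi). ring.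
Qed.

Lemma convex_set_weighted_avg d Om N (w : nat -> R) (y : nat -> vec) : convex_set d Om ->
  (forall i, (i < N)%nat -> 0 <= w i) -> 0 < rsum w N ->
  (forall i, (i < N)%nat -> Om (y i)) ->
  Om (fun k => rsum (fun i => w i * y i k) N / rsum w N).
Proof.
  intros Hc. induction N; intros Hw Hpos Hy.
  - simpl in Hpos. lra.
  - assert (HwN : 0 <= rsum w N) by (apply rsum_nonneg; intros; apply Hw; lia).
    assert (Hn : 0 <= w N) by (apply Hw; lia).
    simpl in Hpos.
    destruct (Req_dec (rsum w N) 0) as [Hz|Hz].
    + assert (E : (fun k => rsum (fun i => w i * y i k) (S N) / rsum w (S N)) = y N).
      { apply functional_extensionality. intros k. simpl.
        rewrite (rsum_zero_weights w N (fun i => y i k)) by (auto; intros; apply Hw; lia).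
        rewrite Hz. field. lra. }
      rewrite E. apply Hy. lia.
    + set (l := rsum w N / rsum w (S N)).
      assert (Hl : 0 <= l <= 1).
      { unfold l. simpl. split; [unfold Rdiv; apply Rmult_le_pos; [lra|left; apply Rinv_0_lt_compat; lra]|].
        apply Rmult_le_reg_r with (rsum w N + w N); [lra|].
        unfold Rdiv. rewrite Rmult_assoc, Rinv_l by lra. lra. }
      assert (IH : Om (fun k => rsum (fun i => w i * y i k) N / rsum w N)).
      { apply IHN; [intros; apply Hw; lia | lra | intros; apply Hy; lia]. }
      assert (H := Hc _ _ l IH (Hy N (Nat.lt_succ_diag_r N)) Hl).
      assert (E : (fun k => l * (rsum (fun i => w i * y i k) N / rsum w N) + (1 - l) * y N k) =
                  (fun k => rsum (fun i => w i * y i k) (S N) / rsum w (S N))).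
      { apply functional_extensionality. intros k. unfold l. simpl. field. lra. }
      cbv beta in H. rewrite E in H. exact H.
Qed.

Lemma jensen_weighted_avg d f N (w : nat -> R) (y : nat -> vec) : convex_fun d f ->
  (forall i, (i < N)%nat -> 0 <= w i) -> 0 < rsum w N ->
  (forall i, (i < N)%nat -> inRd d (y i)) ->
  f (fun k => rsum (fun i => w i * y i k) N / rsum w N) <=
  rsum (fun i => w i * f (y i)) N / rsum w N.
Proof.
  intros Hc. induction N; intros Hw Hpos Hy.
  - simpl in Hpos. lra.
  - assert (HwN : 0 <= rsum w N) by (apply rsum_nonneg; intros; apply Hw; lia).
    assert (Hn : 0 <= w N) by (apply Hw; lia).
    simpl in Hpos.
    destruct (Req_dec (rsum w N) 0) as [Hz|Hz].
    + assert (E : (fun k => rsum (fun i => w i * y i k) (S N) / rsum w (S N)) = y N).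
      { apply functional_extensionality. intros k. simpl.
        rewrite (rsum_zero_weights w N (fun i => y i k)) by (auto; intros; apply Hw; lia).
        rewrite Hz. field. lra. }
      rewrite E. simpl.
      rewrite (rsum_zero_weights w N (fun i => f (y i))) by (auto; intros; apply Hw; lia).
      rewrite Hz. right. field. lra.
    + set (l := rsum w N / rsum w (S N)).
      assert (Hl : 0 <= l <= 1).
      { unfold l. simpl. split; [unfold Rdiv; apply Rmult_le_pos; [lra|left; apply Rinv_0_lt_compat; lra]|].
        apply Rmult_le_reg_r with (rsum w N + w N); [lra|].
        unfold Rdiv. rewrite Rmult_assoc, Rinv_l by lra. lra. }
      assert (IH := IHN ltac:(intros; apply Hw; lia) ltac:(lra) ltac:(intros; apply Hy; lia)).
      assert (Hin : inRd d (fun k => rsum (fun i => w i * y i k) N / rsum w N))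
        by (apply inRd_weighted_avg; intros; apply Hy; lia).
      assert (H := Hc _ _ l Hin (Hy N (Nat.lt_succ_diag_r N)) Hl).
      assert (E : (fun k => l * (rsum (fun i => w i * y i k) N / rsum w N) + (1 - l) * y N k) =
                  (fun k => rsum (fun i => w i * y i k) (S N) / rsum w (S N))).
      { apply functional_extensionality. intros k. unfold l. simpl. field. lra. }
      cbv beta in H. rewrite E in H.
      eapply Rle_trans; [exact H|].
      assert (E2 : rsum (fun i => w i * f (y i)) (S N) / rsum w (S N) =
         l * (rsum (fun i => w i * f (y i)) N / rsum w N) + (1 - l) * f (y N)).
      { unfold l. simpl. field. lra. }
      rewrite E2. apply Rplus_le_compat_r. apply Rmult_le_compat_l; lra.
Qed.

Lemma rsum_sqr (x : nat -> R) m : (rsum x m) ^ 2 = rsum (fun k => rsum (fun l => x k * x l) m) m.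
Proof.
  replace (rsum x m ^ 2) with (rsum x m * rsum x m) by ring.
  rewrite <- rsum_scal_r. apply rsum_ext. intros. rewrite rsum_scal_l. reflexivity.
Qed.

Lemma orthogonal_mx_isometry n U (a : nat -> R) : orthogonal_mx n U ->
  rsum (fun i => (rsum (fun k => U i k * a k) n) ^ 2) n = rsum (fun k => a k ^ 2) n.
Proof.
  intros HU.
  rewrite (rsum_ext _ (fun i => rsum (fun k => rsum (fun l => a k * a l * (U i k * U i l)) n) n)).
  2:{ intros i Hi. rewrite rsum_sqr. apply rsum_ext. intros. apply rsum_ext. intros. ring. }
  rewrite rsum_swap. apply rsum_ext. intros k Hk.
  rewrite (rsum_swap (fun i l => a k * a l * (U i k * U i l))).
  rewrite (rsum_ext _ (fun l => (a k * a l) * (if Nat.eq_dec k l then 1 else 0))).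
  - rewrite (rsum_kronecker_l (fun l => a k * a l)) by auto. ring.
  - intros l Hl. rewrite rsum_scal_l. rewrite HU by auto. reflexivity.
Qed.

Lemma bessel_ineq n V (v : nat -> R) : orthogonal_mx n V ->
  rsum (fun k => (rsum (fun j => V j k * v j) n) ^ 2) n <= rsum (fun j => v j ^ 2) n.
Proof.
  intros HV.
  set (c := fun k => rsum (fun j => V j k * v j) n).
  assert (H0 : 0 <= rsum (fun j => (v j - rsum (fun k => V j k * c k) n) ^ 2) n)
    by (apply rsum_nonneg; intros; apply pow2_ge_0).
  rewrite (rsum_ext _ (fun j => v j ^ 2 + (-2) * (v j * rsum (fun k => V j k * c k) n)
            + (rsum (fun k => V j k * c k) n) ^ 2)) in H0 by (intros; ring).
  rewrite !rsum_add, rsum_scal_l in H0.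
  rewrite orthogonal_mx_isometry in H0 by auto.
  assert (E : rsum (fun j => v j * rsum (fun k => V j k * c k) n) n = rsum (fun k => c k ^ 2) n).
  { rewrite (rsum_ext _ (fun j => rsum (fun k => c k * (V j k * v j)) n)).
    - rewrite rsum_swap. apply rsum_ext. intros k Hk. rewrite rsum_scal_l. unfold c. ring.
    - intros j Hj. rewrite <- rsum_scal_l. apply rsum_ext. intros. ring. }
  rewrite E in H0. change (rsum (fun k => c k ^ 2) n <= rsum (fun j => v j ^ 2) n). lra.
Qed.

Lemma doubly_stochastic_contract n W (u : nat -> R) : doubly_stochastic n W ->
  rsum (fun i => (rsum (fun j => W i j * u j) n) ^ 2) n <= rsum (fun j => u j ^ 2) n.
Proof.
  intros [Hnn [Hr Hcol]].
  eapply Rle_trans.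
  - apply rsum_le. intros i Hi. apply (rsum_weighted_cauchy_schwarz (fun j => W i j) u n).
  intros; apply Hnn; auto.
  - rewrite (rsum_ext _ (fun i => rsum (fun j => W i j * u j ^ 2) n)).
    + rewrite rsum_swap. right. apply rsum_ext. intros j Hj.
      rewrite rsum_scal_r, Hcol by auto. ring.
    + intros i Hi. rewrite Hr by auto. ring.
Qed.

Section Spectral.
Variables (n : nat) (W U V : nat -> nat -> R) (s : nat -> R).
Hypotheses (HW : doubly_stochastic n W) (Hsvd : is_svd n W U s V) (Hn : (2 <= n)%nat)
  (Hs1 : s 1%nat < 1).

Definition svd_coef (v : nat -> R) k := rsum (fun j => V j k * v j) n.

Lemma svd_sqnorm_image v : rsum (fun i => (rsum (fun j => W i j * v j) n) ^ 2) n =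
  rsum (fun k => (s k * svd_coef v k) ^ 2) n.
Proof.
  destruct Hsvd as [HU [HV [Hpos [Hmono HWe]]]].
  rewrite <- (orthogonal_mx_isometry n U (fun k => s k * svd_coef v k)) by auto.
  apply rsum_ext. intros i Hi. f_equal.
  rewrite (rsum_ext _ (fun j => rsum (fun k => U i k * s k * V j k * v j) n)).
  - rewrite rsum_swap. apply rsum_ext. intros k Hk. unfold svd_coef. rewrite <- !rsum_scal_l.
    apply rsum_ext. intros. ring.
  - intros j Hj. rewrite HWe by auto. rewrite rsum_scal_r. reflexivity.
Qed.

Lemma sv_le_second k : (1 <= k < n)%nat -> s k <= s 1%nat.
Proof.
  destruct Hsvd as [HU [HV [Hpos [Hmono HWe]]]].
  intros [H1 H2]. induction k; [lia|].
  destruct (Nat.eq_dec k 0); [subst; lra|].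
  eapply Rle_trans; [apply Hmono; auto| apply IHk; lia].
Qed.

Lemma top_sv_le1 : s 0%nat <= 1.
Proof.
  destruct Hsvd as [HU [HV [Hpos [Hmono HWe]]]].
  assert (H := doubly_stochastic_contract n W (fun j => V j 0%nat) HW).
  rewrite svd_sqnorm_image in H.
  rewrite (rsum_ext (fun k => (s k * svd_coef (fun j => V j 0%nat) k) ^ 2)
     (fun k => (s k) ^ 2 * (if Nat.eq_dec k 0 then 1 else 0))) in H.
  2:{ intros k Hk. unfold svd_coef. rewrite HV by lia. destruct Nat.eq_dec; ring. }
  rewrite (rsum_kronecker_r (fun k => s k ^ 2)) in H by lia.
  rewrite (rsum_ext _ (fun j => V j 0%nat * V j 0%nat)) in H by (intros; ring).
  rewrite HV in H by lia. simpl in H.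
  assert (0 <= s 0%nat) by (apply Hpos; lia). nra.
Qed.

Lemma svd_tail_le c : rsum (fun k => (s (S k) * c (S k)) ^ 2) (pred n) <=
  s 1%nat ^ 2 * rsum (fun k => c (S k) ^ 2) (pred n).
Proof.
  destruct Hsvd as [_ [_ [Hpos _]]].
  rewrite <- rsum_scal_l. apply rsum_le. intros k Hk.
  assert (0 <= s (S k)) by (apply Hpos; lia).
  assert (s (S k) <= s 1%nat) by (apply sv_le_second; lia).
  rewrite Rpow_mult_distr. apply Rmult_le_compat_r; [apply pow2_ge_0|]. nra.
Qed.

(* [W] fixes the all-ones vector, whose image has squared norm [n]; since [s 0 <= 1] and the
   other singular values are [< 1], its whole mass must sit on the first right singular vector. *)
Lemma ones_top_coef_ge : INR n <= svd_coef (fun _ => 1) 0%nat ^ 2.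
Proof.
  assert (Hs0 := top_sv_le1).
  destruct Hsvd as [HU [HV [Hpos _]]]. destruct HW as [_ [Hr _]].
  assert (H1 : rsum (fun k => (s k * svd_coef (fun _ => 1) k) ^ 2) n = INR n).
  { rewrite <- svd_sqnorm_image, (rsum_ext _ (fun _ => 1)), rsum_const; [ring|].
    intros i Hi. rewrite (rsum_ext _ (fun j => W i j)) by (intros; ring). rewrite Hr by auto. ring.
    }
  assert (HB := bessel_ineq n V (fun _ => 1) HV).
  rewrite (rsum_ext (fun j => 1 ^ 2) (fun _ => 1)), rsum_const in HB by (intros; ring).
  set (a := svd_coef (fun _ => 1)) in *.
  change (rsum (fun k => a k ^ 2) n <= INR n * 1) in HB.
  rewrite (rsum_shift_pos _ n) in H1 by lia. rewrite (rsum_shift_pos _ n) in HB by lia.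
  assert (Hrest := svd_tail_le a).
  assert (H0s : 0 <= s 0%nat) by (apply Hpos; lia).
  assert (Hr0 : 0 <= rsum (fun k => a (S k) ^ 2) (pred n))
    by (apply rsum_nonneg; intros; apply pow2_ge_0).
  assert (Ha0 : (s 0%nat * a 0%nat) ^ 2 <= a 0%nat ^ 2).
  { rewrite Rpow_mult_distr. assert (0 <= a 0%nat ^ 2) by apply pow2_ge_0.
    assert (s 0%nat ^ 2 <= 1) by nra. nra. }
  set (R0 := rsum (fun k => a (S k) ^ 2) (pred n)) in *.
  assert (s 1%nat ^ 2 < 1) by (assert (0 <= s 1%nat) by (apply Hpos; lia); nra).
  destruct (Rle_dec (INR n) (a 0%nat ^ 2)); [lra|].
  assert (s 1%nat ^ 2 * R0 <= s 1%nat ^ 2 * (INR n - a 0%nat ^ 2))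
    by (apply Rmult_le_compat_l; [apply pow2_ge_0| lra]).
  nra.
Qed.

Lemma top_right_sv_constant : exists a0, a0 <> 0 /\ forall j, (j < n)%nat -> a0 * V j 0%nat = 1.
Proof.
  assert (HN := ones_top_coef_ge).
  destruct Hsvd as [_ [HV _]].
  set (a := svd_coef (fun _ => 1) 0%nat) in *.
  assert (Hn2 : 2 <= INR n) by (replace 2 with (INR 2) by (simpl; ring); apply le_INR; lia).
  exists a. split.
  { intros E. rewrite E in HN. lra. }
  assert (Hz : rsum (fun j => (1 - a * V j 0%nat) ^ 2) n <= 0).
  { rewrite (rsum_ext _ (fun j => 1 + (-2 * a) * V j 0%nat + a ^ 2 * (V j 0%nat * V j 0%nat)))
      by (intros; ring).
    rewrite !rsum_add, !rsum_scal_l, rsum_const, HV by lia. destruct (Nat.eq_dec 0 0); [|lia].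
    assert (E : rsum (fun j => V j 0%nat) n = a).
    { unfold a, svd_coef. apply rsum_ext. intros; ring. }
    rewrite E. lra. }
  intros j Hj.
  assert (Hj0 := rsum_nonneg_le0_eq0 _ _ (fun i _ => pow2_ge_0 _) Hz j Hj). simpl in Hj0. nra.
Qed.

Lemma second_sv_contract v : rsum v n = 0 ->
  rsum (fun i => (rsum (fun j => W i j * v j) n) ^ 2) n <= s 1%nat ^ 2 * rsum (fun j => v j ^ 2) n.
Proof.
  intros Hv.
  destruct Hsvd as [HU [HV [Hpos _]]].
  destruct top_right_sv_constant as [a0 [Ha0 Hc]].
  assert (Hc0 : svd_coef v 0%nat = 0).
  { apply Rmult_eq_reg_l with a0; auto. unfold svd_coef. rewrite <- rsum_scal_l.
    rewrite (rsum_ext _ v), Hv; [ring|].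
    intros j Hj. rewrite <- Rmult_assoc, Hc by auto. ring. }
  rewrite svd_sqnorm_image.
  assert (HB := bessel_ineq n V v HV). fold (svd_coef v) in HB.
  change (rsum (fun k => svd_coef v k ^ 2) n <= rsum (fun j => v j ^ 2) n) in HB.
  rewrite (rsum_shift_pos _ n) in HB by lia. rewrite (rsum_shift_pos _ n) by lia.
  rewrite Hc0 in HB |- *.
  assert (Hrest := svd_tail_le (svd_coef v)).
  assert (0 <= s 1%nat ^ 2) by apply pow2_ge_0.
  assert (s 1%nat ^ 2 * rsum (fun k => svd_coef v (S k) ^ 2) (pred n) <=
          s 1%nat ^ 2 * rsum (fun j => v j ^ 2) n).
  { apply Rmult_le_compat_l; auto. replace (0 ^ 2) with 0 in HB by ring. lra. }
  replace ((s 0%nat * 0) ^ 2) with 0 by ring. lra.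
Qed.

End Spectral.

Lemma recursion_linear_bound (q b : nat -> R) s B0 : 0 <= s <= 1 -> q 1%nat = 0 ->
  (forall m, 0 <= q m) ->
  (forall m, (1 <= m)%nat -> q (S m) <= s * (q m + b m)) ->
  (forall m, (1 <= m)%nat -> 0 <= b m <= B0) ->
  forall i, q (1 + i)%nat <= INR i * B0.
Proof.
  intros Hs H1 Hq Hr Hb. induction i.
  - simpl. rewrite H1. lra.
  - replace (1 + S i)%nat with (S (1 + i)) by lia. rewrite S_INR.
    eapply Rle_trans; [apply Hr; lia|].
    specialize (Hb (1 + i)%nat ltac:(lia)). specialize (Hq (1 + i)%nat).
    assert (s * (q (1 + i)%nat + b (1 + i)%nat) <= q (1 + i)%nat + b (1 + i)%nat) by nra.
    lra.
Qed.

Lemma recursion_geometric_sum_bound (q b : nat -> R) s j : 0 <= s < 1 -> (1 <= j)%nat ->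
  (forall m, (1 <= m)%nat -> q (S m) <= s * (q m + b m)) ->
  (forall m, (j <= m)%nat -> b m <= b j) -> 0 <= b j ->
  forall i, q (j + i)%nat <= s ^ i * q j + b j * s * (1 - s ^ i) / (1 - s).
Proof.
  intros Hs Hj Hr Hb Hbj. induction i.
  - simpl. rewrite Nat.add_0_r. right. field. lra.
  - replace (j + S i)%nat with (S (j + i)) by lia.
    eapply Rle_trans; [apply Hr; lia|].
    assert (Hbm := Hb (j + i)%nat ltac:(lia)).
    assert (s * (q (j + i)%nat + b (j + i)%nat) <= s * (s ^ i * q j + b j * s * (1 - s ^ i) / (1 - s) + b j))
      by (apply Rmult_le_compat_l; lra).
    eapply Rle_trans; [exact H|]. right. simpl. field. lra.
Qed.

Lemma recursion_geometric_bound (q b : nat -> R) s j : 0 <= s < 1 -> (1 <= j)%nat ->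
  (forall m, (1 <= m)%nat -> q (S m) <= s * (q m + b m)) ->
  (forall m, (j <= m)%nat -> b m <= b j) -> 0 <= b j ->
  forall i, q (j + i)%nat <= s ^ i * q j + b j / (1 - s).
Proof.
  intros Hs Hj Hr Hb Hbj i.
  eapply Rle_trans; [apply (recursion_geometric_sum_bound q b s j); auto|].
  apply Rplus_le_compat_l. unfold Rdiv.
  apply Rmult_le_compat_r; [left; apply Rinv_0_lt_compat; lra|].
  assert (0 <= s ^ i <= 1) by (split; [apply pow_le; lra| apply pow_le_one; lra]).
  assert (s * (1 - s ^ i) <= 1) by nra. nra.
Qed.

Lemma rsum_ft_first a t f : (a <= t)%nat -> rsum_ft a t f = f a + rsum_ft (S a) t f.
Proof.
  intros H. unfold rsum_ft. replace (S t - a)%nat with (S (t - a)) by lia.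
  rewrite rsum_shift. rewrite Nat.add_0_r. f_equal.
  replace (S t - S a)%nat with (t - a)%nat by lia. apply rsum_ext. intros. f_equal. lia.
Qed.

Lemma rsum_ft_start_mono a b t f : (1 <= a)%nat -> (a <= b)%nat -> (b <= S t)%nat ->
  (forall k, (1 <= k)%nat -> 0 <= f k) -> rsum_ft b t f <= rsum_ft a t f.
Proof.
  intros Ha Hab Hb Hf. induction Hab; [lra|].
  assert (IH := IHHab ltac:(lia)).
  rewrite (rsum_ft_first m t f) in IH by lia.
  assert (0 <= f m) by (apply Hf; lia). lra.
Qed.

Lemma rsum_ft_pos a t f : (1 <= a)%nat -> (a <= t)%nat -> (forall k, (1 <= k)%nat -> 0 < f k) ->
  0 < rsum_ft a t f.
Proof.
  intros Ha Hat Hf. rewrite rsum_ft_first by auto.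
  assert (0 <= rsum_ft (S a) t f).
  { unfold rsum_ft. apply rsum_nonneg. intros. left. apply Hf. lia. }
  assert (0 < f a) by auto. lra.
Qed.

Lemma rsum_ft_shift a N f : rsum_ft a (a + N) f = rsum (fun k => f (a + k)%nat) (S N).
Proof. unfold rsum_ft. f_equal. lia. Qed.

Lemma tprime_bounds t : (1 <= t)%nat -> (1 <= tprime t <= t)%nat.
Proof.
  intros. unfold tprime. split; [lia|]. apply Nat.max_lub; [lia|].
  apply Nat.Div0.div_le_upper_bound; lia.
Qed.

Lemma window_sq_le_tail (alpha : nat -> R) a t l :
  (a <= t)%nat -> tail_sq alpha a l -> rsum_ft a t (fun k => alpha k ^ 2) <= l.
Proof.
  intros Hat HS.
  set (u := fun N => rsum_ft a (a + N) (fun k => alpha k ^ 2)).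
  assert (Hu : Un_growing u).
  { intros N. unfold u. rewrite !rsum_ft_shift. cbn [rsum].
    assert (0 <= alpha (a + S N)%nat ^ 2) by apply pow2_ge_0. lra. }
  assert (H := growing_ineq u l Hu HS (t - a)).
  unfold u in H. replace (a + (t - a))%nat with t in H by lia. exact H.
Qed.

Lemma half_window_length k t : (1 <= t)%nat -> (tprime t <= k)%nat -> (6 * (k - k / 2) >= t)%nat.
Proof.
  intros Ht Hk. unfold tprime in Hk.
  assert (E1 := Nat.div_mod k 2 ltac:(lia)). assert (E2 := Nat.mod_upper_bound k 2 ltac:(lia)).
  assert (E3 := Nat.div_mod t 2 ltac:(lia)). assert (E4 := Nat.mod_upper_bound t 2 ltac:(lia)).
  assert (Hm := Nat.le_max_l 1 (t / 2)). assert (Hm2 := Nat.le_max_r 1 (t / 2)).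
  lia.
Qed.

(* The constant [6] of the theorem is the one for which the window [[t', t]] leaves
   at least [t / 6] mixing rounds between [k / 2] and [k]. *)
Lemma log_condition_damps_start s t k amax Ca at_ : 0 <= s < 1 -> 0 < Ca -> 0 < at_ -> 0 < amax ->
  (1 <= t)%nat -> (tprime t <= k)%nat ->
  INR t >= 6 / (1 - s) * ln ((1 - s) * INR t * amax / (Ca * at_)) ->
  s ^ (k - k / 2) * INR t * amax <= Ca * at_ / (1 - s).
Proof.
  intros Hs HC Ha Ham Ht Hk Hcond.
  assert (Htp : 0 < INR t) by (apply lt_0_INR; lia).
  set (A := (1 - s) * INR t * amax / (Ca * at_)) in *.
  assert (HA : 0 < A) by (unfold A; apply Rdiv_lt_0_compat; [apply Rmult_lt_0_compat; [apply Rmult_lt_0_compat|]|]; nra).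
  assert (Hp : 0 <= s ^ (k - k / 2) <= 1) by (split; [apply pow_le; lra | apply pow_le_one; lra]).
  assert (Hdamp : s ^ (k - k / 2) * A <= 1).
  { destruct (Rle_dec A 1) as [HA1|HA1]; [nra|].
    assert (Hln : 0 < ln A) by (rewrite <- ln_1; apply ln_increasing; lra).
    assert (Hc2 : (1 - s) * INR t >= 6 * ln A).
    { replace (6 * ln A) with ((1 - s) * (6 / (1 - s) * ln A)) by (field; lra). nra. }
    assert (Hkk : INR t <= 6 * INR (k - k / 2)).
    { replace 6 with (INR 6) by (simpl; ring). rewrite <- mult_INR. apply le_INR.
      apply half_window_length; auto. }
    assert (Hexp : s ^ (k - k / 2) <= / A).
    { eapply Rle_trans; [apply pow_le_exp; lra|].
      rewrite <- (exp_ln A), <- exp_Ropp by auto. apply exp_le_compat. nra. }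
    apply Rmult_le_reg_r with (/ A); [apply Rinv_0_lt_compat; auto|].
    rewrite Rmult_assoc, Rinv_r, Rmult_1_r, Rmult_1_l by lra. auto. }
  replace (s ^ (k - k / 2) * INR t * amax) with (s ^ (k - k / 2) * A * (Ca * at_ / (1 - s)))
    by (unfold A; field; lra).
  rewrite <- (Rmult_1_l (Ca * at_ / (1 - s))) at 2.
  apply Rmult_le_compat_r; [apply Rlt_le, Rdiv_lt_0_compat; nra| exact Hdamp].
Qed.

Section Iteration.
Variables (n d : nat) (f : nat -> vec -> R) (L : R) (Om : vec -> Prop) (D : R)
  (xstar : vec) (W : nat -> nat -> R) (sigma : R) (alpha : nat -> R) (x g P : nat -> nat -> vec).
Hypotheses (Hst : standing n d f L Om D xstar W sigma)
  (Hrun : dsgd_run n d f Om W alpha x g P)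
  (Hapos : forall t, (1 <= t)%nat -> 0 < alpha t).

Lemma f_convex i : (i < n)%nat -> convex_fun d (f i).
Proof. intros. apply Hst; auto. Qed.
Lemma f_subgrad_bounded i : (i < n)%nat -> subgrad_bounded d (f i) L.
Proof. intros. apply Hst; auto. Qed.
Lemma Om_subset : subset_Rd d Om. Proof. apply Hst. Qed.
Lemma Om_convex : convex_set d Om. Proof. apply Hst. Qed.
Lemma Om_diam : diam_le d Om D. Proof. apply Hst. Qed.
Lemma xstar_in_Om : Om xstar. Proof. apply Hst. Qed.
Lemma W_doubly_stochastic : doubly_stochastic n W. Proof. apply Hst. Qed.
Lemma sigma_lt1 : sigma < 1. Proof. apply Hst. Qed.
Lemma n_ge2 : (2 <= n)%nat. Proof. apply Hst. Qed.
Lemma W_svd : exists U s V, is_svd n W U s V /\ sigma = s 1%nat. Proof. apply Hst. Qed.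

Lemma sigma_nonneg : 0 <= sigma.
Proof.
  destruct W_svd as [U [s [V [[_ [_ [Hp _]]] E]]]]. rewrite E. apply Hp. assert (H := n_ge2). lia.
Qed.

Lemma W_contract_mean_zero v : rsum v n = 0 ->
  rsum (fun i => (rsum (fun j => W i j * v j) n) ^ 2) n <= sigma ^ 2 * rsum (fun j => v j ^ 2) n.
Proof.
  intros Hv. destruct W_svd as [U [s [V [Hs E]]]]. rewrite E.
  apply (second_sv_contract n W U V s W_doubly_stochastic Hs n_ge2); auto. rewrite <- E.
  apply sigma_lt1.
Qed.

Lemma W_row_sum i : (i < n)%nat -> rsum (fun j => W i j) n = 1.
Proof. apply W_doubly_stochastic. Qed.
Lemma W_col_sum j : (j < n)%nat -> rsum (fun i => W i j) n = 1.
Proof. apply W_doubly_stochastic. Qed.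
Lemma W_nonneg i j : (i < n)%nat -> (j < n)%nat -> 0 <= W i j.
Proof. apply W_doubly_stochastic. Qed.

Lemma P_in_Om t j : (1 <= t)%nat -> (j < n)%nat -> Om (P t j).
Proof. intros. destruct Hrun as [_ [_ [HP _]]]. apply (HP t j); auto. Qed.

Lemma x_in_Om t i : (1 <= t)%nat -> (i < n)%nat -> Om (x t i).
Proof.
  intros Ht. revert i. induction t; [lia|]. intros i Hi.
  destruct (Nat.eq_dec t 0).
  - subst. destruct Hrun as [[x0 [H0 H1]] _].
    assert (E : x 1%nat i = x0) by (apply functional_extensionality; intros; apply H1; auto).
    rewrite E. auto.
  - destruct Hrun as [_ [_ [_ Hx]]].
    assert (E : x (S t) i = (fun k => rsum (fun j => W i j * P t j k) n / rsum (fun j => W i j) n)).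
    { apply functional_extensionality. intros k. rewrite W_row_sum by auto. rewrite Hx by (auto; lia).
      field. }
    rewrite E.
    apply (convex_set_weighted_avg d Om n (fun j => W i j) (P t));
      [apply Om_convex | intros; apply W_nonneg; auto | rewrite W_row_sum; auto; lra |].
    intros j Hj. apply P_in_Om; auto; lia.
Qed.

Lemma x_inRd t i : (1 <= t)%nat -> (i < n)%nat -> inRd d (x t i).
Proof. intros. apply Om_subset. apply x_in_Om; auto. Qed.

Lemma g_subgrad t i : (1 <= t)%nat -> (i < n)%nat -> is_subgrad d (f i) (x t i) (g t i).
Proof. intros. destruct Hrun as [_ [Hg _]]. auto. Qed.

Lemma g_norm_le t i : (1 <= t)%nat -> (i < n)%nat -> norm d (g t i) <= L.
Proof.
  intros H H0. exact (f_subgrad_bounded i H0 (x t i) (g t i) (x_inRd t i H H0) (g_subgrad t i H H0)).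
Qed.

Lemma L_nonneg : 0 <= L.
Proof.
  assert (H := g_norm_le 1 0 (le_n 1) ltac:(assert (H := n_ge2); lia)).
  assert (H2 := norm_nonneg d (g 1%nat 0%nat)). lra.
Qed.

Lemma P_is_proj t j : (1 <= t)%nat -> (j < n)%nat ->
  is_proj d Om (fun k => x t j k - alpha t * g t j k) (P t j).
Proof. intros. destruct Hrun as [_ [_ [HP _]]]. auto. Qed.

Lemma P_dist_x_le t j : (1 <= t)%nat -> (j < n)%nat -> norm d (vsub (P t j) (x t j)) <= alpha t * L.
Proof.
  intros Ht Hj.
  eapply Rle_trans; [apply (proj_dist_le d Om _ _ _ Om_convex (P_is_proj t j Ht Hj) (x_in_Om t j Ht Hj))|].
  rewrite (norm_ext d _ (fun k => (- alpha t) * g t j k)) by (intros; unfold vsub; ring).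
  rewrite norm_scal, Rabs_Ropp, Rabs_right by (specialize (Hapos t Ht); lra).
  apply Rmult_le_compat_l; [specialize (Hapos t Ht); lra|]. apply g_norm_le; auto.
Qed.

Definition sqnorm (v : vec) := dot d v v.

Lemma proj_step_descent t j : (1 <= t)%nat -> (j < n)%nat ->
  sqnorm (vsub (P t j) xstar) <= sqnorm (vsub (x t j) xstar)
     - 2 * alpha t * (f j (x t j) - f j xstar) + alpha t ^ 2 * L ^ 2.
Proof.
  intros Ht Hj. unfold sqnorm.
  assert (H1 := proj_dist_le d Om _ _ _ Om_convex (P_is_proj t j Ht Hj) xstar_in_Om).
  apply dot_le_of_norm_le in H1.
  eapply Rle_trans; [exact H1|].
  destruct (g_subgrad t j Ht Hj) as [_ Hs]. specialize (Hs xstar (Om_subset _ xstar_in_Om)).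
  assert (Hg := g_norm_le t j Ht Hj).
  assert (Hgg : dot d (g t j) (g t j) <= L ^ 2).
  { rewrite <- norm_sq. assert (0 <= norm d (g t j)) by apply norm_nonneg. nra. }
  assert (E1 : dot d (vsub (fun k => x t j k - alpha t * g t j k) xstar)
                     (vsub (fun k => x t j k - alpha t * g t j k) xstar) =
     dot d (vsub (x t j) xstar) (vsub (x t j) xstar) - 2 * alpha t * dot d (g t j) (vsub (x t j) xstar)
     + alpha t ^ 2 * dot d (g t j) (g t j)).
  { unfold dot, vsub. rewrite <- !rsum_scal_l, <- rsum_sub, <- rsum_add. apply rsum_ext. intros. ring. }
  assert (E2 : dot d (g t j) (vsub xstar (x t j)) = - dot d (g t j) (vsub (x t j) xstar)).
  { unfold dot, vsub. replace (- rsum (fun k => g t j k * (x t j k - xstar k)) d) with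
      ((-1) * rsum (fun k => g t j k * (x t j k - xstar k)) d) by ring. rewrite <- rsum_scal_l.
    apply rsum_ext. intros. ring. }
  rewrite E1. rewrite E2 in Hs.
  assert (0 < alpha t) by auto.
  assert (0 <= alpha t ^ 2) by apply pow2_ge_0.
  assert (alpha t ^ 2 * dot d (g t j) (g t j) <= alpha t ^ 2 * L ^ 2) by (apply Rmult_le_compat_l; auto).
  nra.
Qed.

Lemma sqnorm_sum v : sqnorm v = rsum (fun k => v k ^ 2) d.
Proof. apply dot_self_sum. Qed.

Lemma sqnorm_nonneg v : 0 <= sqnorm v.
Proof. apply dot_nonneg. Qed.

Lemma mixing_descent t : (1 <= t)%nat ->
  rsum (fun i => sqnorm (vsub (x (S t) i) xstar)) n <= rsum (fun j => sqnorm (vsub (P t j) xstar)) n.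
Proof.
  intros Ht.
  destruct Hrun as [_ [_ [_ Hx]]].
  eapply Rle_trans with (rsum (fun i => rsum (fun j => W i j * sqnorm (vsub (P t j) xstar)) n) n).
  - apply rsum_le. intros i Hi. rewrite sqnorm_sum.
    rewrite (rsum_ext _ (fun k => (rsum (fun j => W i j * (P t j k - xstar k)) n) ^ 2)).
    2:{ intros k Hk. unfold vsub. rewrite Hx by auto.
        rewrite (rsum_ext (fun j => W i j * (P t j k - xstar k))
                   (fun j => W i j * P t j k - W i j * xstar k)) by (intros; ring).
        rewrite rsum_sub, rsum_scal_r, W_row_sum by auto. ring. }
    eapply Rle_trans.
    + apply rsum_le. intros k Hk.
    apply (rsum_weighted_cauchy_schwarz (fun j => W i j) (fun j => P t j k - xstar k) n).
      intros; apply W_nonneg; auto.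
    + rewrite W_row_sum by auto.
      rewrite (rsum_ext _ (fun k => rsum (fun j => W i j * (P t j k - xstar k) ^ 2) n)) by (intros; ring).
      rewrite rsum_swap. right. apply rsum_ext. intros j Hj. rewrite sqnorm_sum, <- rsum_scal_l.
      reflexivity.
  - rewrite rsum_swap. right. apply rsum_ext. intros j Hj. rewrite rsum_scal_r, W_col_sum by auto.
  ring.
Qed.

Definition xb t := xbar n x t.

Lemma xb_inRd t : (1 <= t)%nat -> inRd d (xb t).
Proof.
  intros Ht k Hk. unfold xb, xbar. rewrite (rsum_ext _ (fun _ => 0)). rewrite rsum_zero. ring.
  intros i Hi. apply x_inRd; auto.
Qed.

Lemma rsum_f_xb_le t : (1 <= t)%nat ->
  rsum (fun j => f j (xb t)) n - L * rsum (fun j => norm d (vsub (x t j) (xb t))) n <=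
  rsum (fun j => f j (x t j)) n.
Proof.
  intros Ht. rewrite <- rsum_scal_l, <- rsum_sub. apply rsum_le. intros j Hj.
  assert (H := convex_lipschitz d (f j) L (xb t) (x t j) (f_convex j Hj) (f_subgrad_bounded j Hj)
                 (xb_inRd t Ht) (x_inRd t j Ht Hj)).
  rewrite dist_sym in H. lra.
Qed.

Definition dist2_opt t := rsum (fun i => sqnorm (vsub (x t i) xstar)) n.

Lemma dist2_opt_step t : (1 <= t)%nat ->
  dist2_opt (S t) <= dist2_opt t - 2 * alpha t * (rsum (fun j => f j (xb t)) n - rsum (fun j => f j xstar) n)
    + 2 * alpha t * L * rsum (fun j => norm d (vsub (x t j) (xb t))) n + INR n * (alpha t ^ 2 * L ^ 2).
Proof.
  intros Ht. unfold dist2_opt.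
  eapply Rle_trans; [apply mixing_descent; auto|].
  eapply Rle_trans; [apply rsum_le; intros j Hj; apply proj_step_descent; auto|].
  rewrite rsum_add, rsum_sub, rsum_const, rsum_scal_l, rsum_sub.
  assert (H := rsum_f_xb_le t Ht). assert (0 < alpha t) by auto. nra.
Qed.

Definition disagreement t := rsum (fun i => sqnorm (vsub (x t i) (xb t))) n.

Lemma INR_n_pos : 0 < INR n.
Proof. apply lt_0_INR. assert (H := n_ge2). lia. Qed.

Lemma rsum_dev_le t :
  rsum (fun j => norm d (vsub (x t j) (xb t))) n <= sqrt (INR n) * sqrt (disagreement t).
Proof.
  assert (H := rsum_cauchy_schwarz_sqrt (fun j => norm d (vsub (x t j) (xb t))) (fun _ => 1) n).
  rewrite (rsum_ext (fun i => norm d (vsub (x t i) (xb t)) * 1) (fun j => norm d (vsub (x t j) (xb t))))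
    in H by (intros; ring).
  rewrite (rsum_ext (fun i => 1 ^ 2) (fun _ => 1)) in H by (intros; ring).
  rewrite rsum_const, Rmult_1_r in H.
  rewrite (rsum_ext (fun i => norm d (vsub (x t i) (xb t)) ^ 2) (fun i => sqnorm (vsub (x t i) (xb t)))) in H
    by (intros; apply norm_sq).
  unfold disagreement. lra.
Qed.

Lemma disagreement_init : disagreement 1 = 0.
Proof.
  destruct Hrun as [[x0 [H0 H1]] _].
  unfold disagreement. rewrite (rsum_ext _ (fun _ => 0)). apply rsum_zero.
  intros i Hi. rewrite sqnorm_sum. rewrite (rsum_ext _ (fun _ => 0)). apply rsum_zero.
  intros k Hk. unfold vsub, xb, xbar. rewrite H1 by auto.
  rewrite (rsum_ext _ (fun _ => x0 k)) by (intros; apply H1; auto).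
  rewrite rsum_const. assert (H := INR_n_pos). field_simplify; [ring|lra].
Qed.

Definition Pbar t : vec := fun k => / INR n * rsum (fun j => P t j k) n.

Lemma xb_succ t k : (1 <= t)%nat -> xb (S t) k = Pbar t k.
Proof.
  intros Ht. destruct Hrun as [_ [_ [_ Hx]]].
  unfold xb, xbar, Pbar. f_equal.
  rewrite (rsum_ext _ (fun i => rsum (fun j => W i j * P t j k) n)) by (intros; apply Hx; auto).
  rewrite rsum_swap. apply rsum_ext. intros j Hj. rewrite rsum_scal_r, W_col_sum by auto. ring.
Qed.

Lemma disagreement_succ_le t : (1 <= t)%nat ->
  disagreement (S t) <= sigma ^ 2 * rsum (fun j => sqnorm (vsub (P t j) (Pbar t))) n.
Proof.
  intros Ht. assert (Hn := INR_n_pos). destruct Hrun as [_ [_ [_ Hx]]].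
  unfold disagreement.
  rewrite (rsum_ext _ (fun i => rsum (fun k => (rsum (fun j => W i j * (P t j k - Pbar t k)) n) ^ 2) d)).
  2:{ intros i Hi. rewrite sqnorm_sum. apply rsum_ext. intros k Hk.
      unfold vsub. rewrite xb_succ, Hx by auto.
      rewrite (rsum_ext (fun j => W i j * (P t j k - Pbar t k))
                 (fun j => W i j * P t j k - W i j * Pbar t k)) by (intros; ring).
      rewrite rsum_sub, rsum_scal_r, W_row_sum by auto. ring. }
  rewrite rsum_swap.
  eapply Rle_trans.
  - apply rsum_le. intros k Hk. apply (W_contract_mean_zero (fun j => P t j k - Pbar t k)).
    rewrite rsum_sub, rsum_const. unfold Pbar. field. lra.
  - rewrite rsum_scal_l. right. f_equal. rewrite rsum_swap. apply rsum_ext. intros j Hj.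
    rewrite sqnorm_sum. reflexivity.
Qed.

Lemma proj_spread_le t : (1 <= t)%nat ->
  rsum (fun j => sqnorm (vsub (P t j) (Pbar t))) n <=
  rsum (fun j => (norm d (vsub (x t j) (xb t)) + alpha t * L) ^ 2) n.
Proof.
  intros Ht.
  apply Rle_trans with (rsum (fun j => sqnorm (vsub (P t j) (xb t))) n).
  - rewrite !(rsum_ext (fun j => sqnorm _) (fun j => rsum (fun k => (P t j k - _ k) ^ 2) d))
      by (intros; rewrite sqnorm_sum; reflexivity).
    rewrite (rsum_swap (fun j k => (P t j k - Pbar t k) ^ 2)).
    rewrite (rsum_swap (fun j k => (P t j k - xb t k) ^ 2)).
    apply rsum_le. intros k Hk. apply mean_minimizes_sq_dev, INR_n_pos.
  - apply rsum_le. intros j Hj. unfold sqnorm. rewrite <- norm_sq.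
    assert (T := dist_triangle d (P t j) (x t j) (xb t)).
    assert (T2 := P_dist_x_le t j Ht Hj).
    assert (0 <= norm d (vsub (P t j) (xb t))) by apply norm_nonneg.
    nra.
Qed.

Lemma consensus_step t : (1 <= t)%nat ->
  sqrt (disagreement (S t)) <= sigma * (sqrt (disagreement t) + sqrt (INR n) * (alpha t * L)).
Proof.
  intros Ht. assert (Hn := INR_n_pos). assert (Hs0 := sigma_nonneg). assert (HL := L_nonneg).
  assert (Ha : 0 < alpha t) by auto.
  set (Y := rsum (fun j => sqnorm (vsub (P t j) (Pbar t))) n).
  assert (HY : 0 <= Y) by (apply rsum_nonneg; intros; apply sqnorm_nonneg).
  set (a := fun j => norm d (vsub (x t j) (xb t))).
  assert (Hmink : sqrt (rsum (fun j => (a j + alpha t * L) ^ 2) n) <=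
                  sqrt (disagreement t) + sqrt (INR n) * (alpha t * L)).
  { eapply Rle_trans; [apply (rsum_minkowski a (fun _ => alpha t * L))|].
    apply Rplus_le_compat.
    - right. f_equal. unfold disagreement. apply rsum_ext. intros. unfold a. apply norm_sq.
    - rewrite rsum_const. rewrite sqrt_mult by (lra || apply pow2_ge_0).
      rewrite sqrt_pow2 by (apply Rmult_le_pos; lra). lra. }
  eapply Rle_trans; [apply sqrt_le_1_alt, disagreement_succ_le, Ht|].
  rewrite sqrt_mult, sqrt_pow2 by (apply pow2_ge_0 || auto).
  apply Rmult_le_compat_l; auto.
  eapply Rle_trans; [apply sqrt_le_1_alt, proj_spread_le, Ht| exact Hmink].
Qed.

Variables (Ca' amax : R).
Hypotheses (Hmono : forall t, (1 <= t)%nat -> alpha (S t) <= alpha t)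
  (Hca : forall s, (2 <= s)%nat -> alpha (s / 2)%nat <= Ca' * alpha s)
  (Hamax : forall s, (1 <= s)%nat -> alpha s <= amax).

Lemma alpha_antimono a b : (1 <= a)%nat -> (a <= b)%nat -> alpha b <= alpha a.
Proof.
  intros Ha Hab. induction Hab; [lra|].
  eapply Rle_trans; [apply Hmono; lia| auto].
Qed.

Lemma Ca'_ge1 : 1 <= Ca'.
Proof.
  assert (H := Hca 2 (le_n 2)). simpl in H.
  assert (H1 := alpha_antimono 1 2 (le_n 1) ltac:(lia)). assert (0 < alpha 2) by (apply Hapos; lia).
  destruct (Rle_dec 1 Ca') as [|Hn]; auto. exfalso.
  assert (Ca' * alpha 2%nat < alpha 2%nat) by nra. lra.
Qed.

Lemma disagreement_linear_bound m : (1 <= m)%nat ->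
  sqrt (disagreement m) <= INR (m - 1) * (sqrt (INR n) * (amax * L)).
Proof.
  intros Hm. assert (Hs0 := sigma_nonneg). assert (Hs1 := sigma_lt1). assert (HL := L_nonneg).
  assert (Hsn : 0 <= sqrt (INR n)) by apply sqrt_pos.
  replace m with (1 + (m - 1))%nat at 1 by lia.
  apply (recursion_linear_bound (fun m => sqrt (disagreement m))
           (fun m => sqrt (INR n) * (alpha m * L)) sigma); [lra| | | |].
  - cbv beta. rewrite disagreement_init. apply sqrt_0.
  - intros; apply sqrt_pos.
  - intros; apply consensus_step; auto.
  - intros j Hj. assert (0 < alpha j) by auto. assert (alpha j <= amax) by auto.
    split; [apply Rmult_le_pos; auto; apply Rmult_le_pos; lra|].
    apply Rmult_le_compat_l; auto. apply Rmult_le_compat_r; auto.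
Qed.

Lemma disagreement_geometric_bound h i : (1 <= h)%nat ->
  sqrt (disagreement (h + i)) <=
  sigma ^ i * sqrt (disagreement h) + sqrt (INR n) * (alpha h * L) / (1 - sigma).
Proof.
  intros Hh. assert (Hs0 := sigma_nonneg). assert (Hs1 := sigma_lt1). assert (HL := L_nonneg).
  apply (recursion_geometric_bound (fun m => sqrt (disagreement m))
           (fun m => sqrt (INR n) * (alpha m * L)) sigma h); [lra| exact Hh| | |].
  - intros; apply consensus_step; auto.
  - intros m Hm. apply Rmult_le_compat_l; [apply sqrt_pos|].
    apply Rmult_le_compat_r; [lra|]. apply alpha_antimono; lia.
  - apply Rmult_le_pos; [apply sqrt_pos|]. apply Rmult_le_pos; [left; apply Hapos|]; auto.
Qed.

Lemma consensus_error_bound t k : (1 <= t)%nat -> (tprime t <= k)%nat -> (k <= t)%nat ->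
  INR t >= 6 / (1 - sigma) * ln ((1 - sigma) * INR t * amax / (Ca' * alpha t)) ->
  sqrt (disagreement k) <= 2 * sqrt (INR n) * L * Ca' * alpha k / (1 - sigma).
Proof.
  intros Ht Hk1 Hk2 Hcond.
  assert (Hs := sigma_nonneg). assert (Hs1 := sigma_lt1). assert (HL := L_nonneg).
  assert (HC := Ca'_ge1).
  assert (Hk : (1 <= k)%nat) by (unfold tprime in Hk1; lia).
  assert (Hak : 0 < alpha k) by auto. assert (Hat : 0 < alpha t) by auto.
  assert (Hamp : 0 < amax) by (apply Rlt_le_trans with (alpha t); auto).
  set (c := sqrt (INR n) * L).
  assert (Hc : 0 <= c) by (apply Rmult_le_pos; [apply sqrt_pos| lra]).
  assert (Hdiv : 0 < / (1 - sigma)) by (apply Rinv_0_lt_compat; lra).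
  replace (2 * sqrt (INR n) * L * Ca' * alpha k / (1 - sigma))
    with (c * (Ca' * alpha k / (1 - sigma)) + c * (Ca' * alpha k / (1 - sigma)))
    by (unfold c; field; lra).
  assert (HR : 0 <= c * (Ca' * alpha k / (1 - sigma))).
  { apply Rmult_le_pos; [exact Hc|]. apply Rmult_le_pos; [nra| lra]. }
  destruct (Nat.eq_dec k 1) as [->|E].
  { rewrite disagreement_init, sqrt_0. lra. }
  set (h := (k / 2)%nat).
  assert (Hh1 : (1 <= h)%nat) by (apply Nat.div_le_lower_bound; lia).
  assert (Hhk : (h <= k)%nat) by (apply Nat.Div0.div_le_upper_bound; lia).
  assert (Hg := disagreement_geometric_bound h (k - h) Hh1).
  replace (h + (k - h))%nat with k in Hg by lia.
  assert (Hqh : sqrt (disagreement h) <= INR t * (sqrt (INR n) * (amax * L))).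
  { eapply Rle_trans; [apply disagreement_linear_bound; exact Hh1|].
    apply Rmult_le_compat_r; [apply Rmult_le_pos; [apply sqrt_pos| nra]|].
    apply le_INR; lia. }
  assert (Hdamp := log_condition_damps_start sigma t k amax Ca' (alpha t)
                     ltac:(lra) ltac:(lra) Hat Hamp Ht Hk1 Hcond).
  fold h in Hdamp.
  assert (Hsp : 0 <= sigma ^ (k - h)) by (apply pow_le; lra).
  assert (T1 : sigma ^ (k - h) * sqrt (disagreement h) <= c * (Ca' * alpha k / (1 - sigma))).
  { apply Rle_trans with (c * (sigma ^ (k - h) * INR t * amax)).
    - replace (c * (sigma ^ (k - h) * INR t * amax))
        with (sigma ^ (k - h) * (INR t * (sqrt (INR n) * (amax * L)))) by (unfold c; ring).
      apply Rmult_le_compat_l; auto.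
    - apply Rmult_le_compat_l; [exact Hc|]. eapply Rle_trans; [exact Hdamp|].
      unfold Rdiv. apply Rmult_le_compat_r; [lra|].
      apply Rmult_le_compat_l; [lra| apply alpha_antimono; auto]. }
  assert (T2 : sqrt (INR n) * (alpha h * L) / (1 - sigma) <= c * (Ca' * alpha k / (1 - sigma))).
  { replace (sqrt (INR n) * (alpha h * L) / (1 - sigma)) with (c * (alpha h / (1 - sigma)))
      by (unfold c; field; lra).
    apply Rmult_le_compat_l; [exact Hc|]. unfold Rdiv. apply Rmult_le_compat_r; [lra|].
    apply Hca. lia. }
  lra.
Qed.

Lemma rsum_f_eq_Favg y : rsum (fun j => f j y) n = INR n * Favg n f y.
Proof. unfold Favg. assert (H := INR_n_pos). rewrite <- Rmult_assoc, Rinv_r, Rmult_1_l by lra. reflexivity. Qed.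

Lemma averaged_step_ineq t k : (1 <= t)%nat -> (tprime t <= k)%nat -> (k <= t)%nat ->
  INR t >= 6 / (1 - sigma) * ln ((1 - sigma) * INR t * amax / (Ca' * alpha t)) ->
  2 * INR n * (alpha k * (Favg n f (xb k) - Favg n f xstar)) <=
  dist2_opt k - dist2_opt (S k) + INR n * (L ^ 2 * (1 + 4 * Ca' / (1 - sigma)) * alpha k ^ 2).
Proof.
  intros Ht Hk1 Hk2 Hcond.
  assert (Hk : (1 <= k)%nat) by (unfold tprime in Hk1; lia).
  assert (HV := dist2_opt_step k Hk).
  assert (Hq := consensus_error_bound t k Ht Hk1 Hk2 Hcond).
  assert (Hd := rsum_dev_le k).
  rewrite !rsum_f_eq_Favg in HV.
  assert (Hs1 := sigma_lt1). assert (HL := L_nonneg). assert (Hak : 0 < alpha k) by auto.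
  assert (Hn := INR_n_pos).
  assert (Hsn : sqrt (INR n) * sqrt (INR n) = INR n) by (apply sqrt_sqrt; lra).
  assert (Hsn0 : 0 <= sqrt (INR n)) by apply sqrt_pos.
  assert (H2 : rsum (fun j => norm d (vsub (x k j) (xb k))) n <= 2 * INR n * L * Ca' * alpha k / (1 - sigma)).
  { eapply Rle_trans; [exact Hd|].
    eapply Rle_trans; [apply Rmult_le_compat_l; [auto| exact Hq]|].
    right.
    transitivity (2 * (sqrt (INR n) * sqrt (INR n)) * L * Ca' * alpha k / (1 - sigma));
      [field; lra| now rewrite Hsn]. }
  assert (H3 : 2 * alpha k * L * rsum (fun j => norm d (vsub (x k j) (xb k))) n <=
               2 * alpha k * L * (2 * INR n * L * Ca' * alpha k / (1 - sigma))).
  { apply Rmult_le_compat_l; auto. apply Rmult_le_pos; lra. }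
  assert (E : 2 * alpha k * L * (2 * INR n * L * Ca' * alpha k / (1 - sigma)) =
              INR n * (L ^ 2 * (4 * Ca' / (1 - sigma)) * alpha k ^ 2)) by (field; lra).
  rewrite E in H3. lra.
Qed.

Lemma dist2_opt_le_diam t : (1 <= t)%nat -> dist2_opt t <= INR n * D ^ 2.
Proof.
  intros Ht. unfold dist2_opt.
  rewrite <- (rsum_const (D ^ 2)). apply rsum_le. intros i Hi.
  unfold sqnorm. rewrite <- norm_sq.
  assert (H := Om_diam (x t i) xstar (x_in_Om t i Ht Hi) xstar_in_Om).
  assert (0 <= norm d (vsub (x t i) xstar)) by apply norm_nonneg. nra.
Qed.

Lemma dist2_opt_nonneg t : 0 <= dist2_opt t.
Proof. apply rsum_nonneg. intros. apply sqnorm_nonneg. Qed.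

Lemma weighted_descent_sum t : (1 <= t)%nat ->
  INR t >= 6 / (1 - sigma) * ln ((1 - sigma) * INR t * amax / (Ca' * alpha t)) ->
  rsum_ft (tprime t) t (fun k => alpha k * (Favg n f (xb k) - Favg n f xstar)) <=
  D ^ 2 / 2 + L ^ 2 * (1 / 2 + 2 * Ca' / (1 - sigma)) * rsum_ft (tprime t) t (fun k => alpha k ^ 2).
Proof.
  intros Ht Hcond. destruct (tprime_bounds t Ht) as [Ha1 Hat].
  assert (Hn := INR_n_pos). assert (Hs1 := sigma_lt1).
  set (a := tprime t) in *. set (N := (S t - a)%nat).
  set (c := INR n * (L ^ 2 * (1 + 4 * Ca' / (1 - sigma)))).
  assert (Hsum : 2 * INR n * rsum_ft a t (fun k => alpha k * (Favg n f (xb k) - Favg n f xstar)) <=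
                 dist2_opt a - dist2_opt (a + N)%nat + c * rsum_ft a t (fun k => alpha k ^ 2)).
  { unfold rsum_ft. fold N.
    rewrite <- (rsum_telescope dist2_opt a N), <- !rsum_scal_l, <- rsum_add.
    apply rsum_le. intros i Hi.
    eapply Rle_trans; [apply (averaged_step_ineq t (a + i)); auto; unfold N in Hi; lia|].
    right. unfold c. ring. }
  replace (a + N)%nat with (S t) in Hsum by (unfold N; lia).
  assert (HVa := dist2_opt_le_diam a Ha1). assert (HV0 := dist2_opt_nonneg (S t)).
  apply Rmult_le_reg_l with (2 * INR n); [lra|].
  replace (2 * INR n * (D ^ 2 / 2 + L ^ 2 * (1 / 2 + 2 * Ca' / (1 - sigma)) *
                         rsum_ft a t (fun k => alpha k ^ 2)))
    with (INR n * D ^ 2 + c * rsum_ft a t (fun k => alpha k ^ 2)) by (unfold c; field; lra).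
  lra.
Qed.

Lemma Favg_xprime_le t : (1 <= t)%nat ->
  rsum_ft (tprime t) t alpha * Favg n f (xprime n alpha x t) <=
  rsum_ft (tprime t) t (fun k => alpha k * Favg n f (xb k)).
Proof.
  intros Ht. destruct (tprime_bounds t Ht) as [Ha1 Hat].
  assert (Hn := INR_n_pos).
  set (a := tprime t) in *. set (N := (S t - a)%nat).
  set (w := fun i => alpha (a + i)%nat). set (y := fun i => xb (a + i)%nat).
  assert (Hw : forall i, (i < N)%nat -> 0 <= w i) by (intros; left; apply Hapos; lia).
  assert (HW : 0 < rsum w N) by (apply rsum_ft_pos; auto).
  assert (Hy : forall i, (i < N)%nat -> inRd d (y i)) by (intros; apply xb_inRd; lia).
  change (rsum w N * Favg n f (fun k => rsum (fun i => w i * y i k) N / rsum w N) <=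
          rsum (fun i => w i * Favg n f (y i)) N).
  unfold Favg.
  replace (rsum (fun i => w i * (/ INR n * rsum (fun j => f j (y i)) n)) N)
    with (rsum w N * (/ INR n * rsum (fun j => rsum (fun i => w i * f j (y i)) N / rsum w N) n)).
  2:{ unfold Rdiv. rewrite rsum_scal_r, rsum_swap.
      rewrite (rsum_ext (fun i => w i * (/ INR n * rsum (fun j => f j (y i)) n))
                 (fun i => / INR n * rsum (fun j => w i * f j (y i)) n))
        by (intros; rewrite rsum_scal_l; ring).
      rewrite rsum_scal_l. field. lra. }
  apply Rmult_le_compat_l; [lra|]. apply Rmult_le_compat_l; [left; apply Rinv_0_lt_compat; lra|].
  apply rsum_le. intros j Hj. apply (jensen_weighted_avg d); auto. apply f_convex; auto.
Qed.

Lemma weighted_gap_bound t : (1 <= t)%nat ->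
  INR t >= 6 / (1 - sigma) * ln ((1 - sigma) * INR t * amax / (Ca' * alpha t)) ->
  rsum_ft (tprime t) t alpha * (Favg n f (xprime n alpha x t) - Favg n f xstar) <=
  D ^ 2 / 2 + L ^ 2 * (1 / 2 + 2 * Ca' / (1 - sigma)) * rsum_ft (tprime t) t (fun k => alpha k ^ 2).
Proof.
  intros Ht Hcond.
  eapply Rle_trans; [|apply weighted_descent_sum; auto].
  assert (HJ := Favg_xprime_le t Ht).
  assert (E : rsum_ft (tprime t) t (fun k => alpha k * (Favg n f (xb k) - Favg n f xstar)) =
              rsum_ft (tprime t) t (fun k => alpha k * Favg n f (xb k)) -
              rsum_ft (tprime t) t alpha * Favg n f xstar).
  { unfold rsum_ft. rewrite <- rsum_scal_r, <- rsum_sub. apply rsum_ext. intros. ring. }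
  rewrite E. lra.
Qed.

Lemma xb_in_Om t : (1 <= t)%nat -> Om (xb t).
Proof.
  intros Ht. assert (Hn := INR_n_pos).
  assert (E : xb t = (fun k => rsum (fun i => 1 * x t i k) n / rsum (fun _ => 1) n)).
  { apply functional_extensionality. intros k. unfold xb, xbar. rewrite rsum_const.
    rewrite (rsum_ext (fun i => 1 * x t i k) (fun i => x t i k)) by (intros; ring). field. lra. }
  rewrite E.
  apply (convex_set_weighted_avg d Om n (fun _ => 1) (x t)); [apply Om_convex| intros; lra| rewrite rsum_const; lra|].
  intros. apply x_in_Om; auto.
Qed.

Lemma xprime_in_Om t : (1 <= t)%nat -> Om (xprime n alpha x t).
Proof.
  intros Ht.
  destruct (tprime_bounds t Ht) as [Ha1 Hat].
  apply (convex_set_weighted_avg d Om (S t - tprime t) (fun i => alpha (tprime t + i)%nat)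
           (fun i => xb (tprime t + i)%nat)).
  - apply Om_convex.
  - intros; left; apply Hapos; lia.
  - apply (rsum_ft_pos (tprime t) t alpha); auto.
  - intros; apply xb_in_Om; lia.
Qed.

Lemma gap_le_L_D t : (1 <= t)%nat -> Favg n f (xprime n alpha x t) - Favg n f xstar <= L * D.
Proof.
  intros Ht. assert (Hn := INR_n_pos). assert (HL := L_nonneg).
  assert (Hin := xprime_in_Om t Ht).
  unfold Favg. rewrite <- Rmult_minus_distr_l, <- rsum_sub.
  apply Rmult_le_reg_l with (INR n); auto.
  rewrite <- Rmult_assoc, Rinv_r, Rmult_1_l by lra.
  rewrite <- (rsum_const (L * D)). apply rsum_le. intros j Hj.
  eapply Rle_trans.
  { apply (convex_lipschitz d (f j) L);
      [apply f_convex| apply f_subgrad_bounded| apply Om_subset| apply Om_subset]; auto.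
    apply xstar_in_Om. }
  apply Rmult_le_compat_l; auto. apply Om_diam; auto. apply xstar_in_Om.
Qed.

End Iteration.

Lemma tail_budget D L sigma Ca' T S : 0 <= sigma < 1 -> 1 <= Ca' -> 0 <= T -> T <= S ->
  S <= D ^ 2 * (1 - sigma) / (10 * Ca' * L ^ 2) ->
  D ^ 2 / 2 + L ^ 2 * (1 / 2 + 2 * Ca' / (1 - sigma)) * T <= D ^ 2.
Proof.
  intros Hs HC HT0 HT HS.
  assert (HD : 0 <= D ^ 2) by apply pow2_ge_0.
  (* For [L = 0] the bound on [S] says nothing, since Rocq's [/ 0] is [0]. *)
  assert (HL : L ^ 2 * T <= D ^ 2 * (1 - sigma) / (10 * Ca')).
  { assert (HL2 : 0 <= L ^ 2) by apply pow2_ge_0.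
    assert (0 <= D ^ 2 * (1 - sigma) / (10 * Ca')) by (apply Rle_mult_inv_pos; nra).
    destruct (Req_dec (L ^ 2) 0) as [HL0|HL0]; [rewrite HL0; lra|].
    apply Rle_trans with (L ^ 2 * (D ^ 2 * (1 - sigma) / (10 * Ca' * L ^ 2))).
    - apply Rmult_le_compat_l; lra.
    - right. field. split; [lra| intros E; apply HL0; rewrite E; ring]. }
  set (y := L ^ 2 * T) in *.
  assert (Hy : 10 * Ca' * y <= D ^ 2 * (1 - sigma)).
  { apply Rmult_le_compat_l with (r := 10 * Ca') in HL; [|lra].
    replace (10 * Ca' * (D ^ 2 * (1 - sigma) / (10 * Ca'))) with (D ^ 2 * (1 - sigma)) in HL
      by (field; lra).
    exact HL. }
  assert (H2 : 2 * Ca' * y / (1 - sigma) <= D ^ 2 / 5) by (apply Rdiv_le_cross; lra).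
  replace (L ^ 2 * (1 / 2 + 2 * Ca' / (1 - sigma)) * T) with (y / 2 + 2 * Ca' * y / (1 - sigma))
    by (unfold y; field; lra).
  assert (y / 2 <= D ^ 2 / 20) by (destruct (Rle_dec y 0); nra).
  lra.
Qed.

Lemma window_ge_total (alpha : nat -> R) Ca t :
  (forall k, (1 <= k)%nat -> 0 < alpha k) ->
  (forall s, (1 <= s)%nat -> rsum_ft 1 s alpha <= Ca * rsum_ft ((s + 1) / 2) s alpha) ->
  (1 <= t)%nat -> rsum_ft 1 t alpha <= Ca * rsum_ft (tprime t) t alpha.
Proof.
  intros Hpos HCa Ht. destruct (tprime_bounds t Ht) as [Ha1 Hat].
  assert (Hh : (tprime t <= (t + 1) / 2)%nat).
  { unfold tprime. apply Nat.max_lub; [apply Nat.div_le_lower_bound| apply Nat.Div0.div_le_mono]; lia. }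
  assert (Hht : ((t + 1) / 2 <= t)%nat) by (apply Nat.Div0.div_le_upper_bound; lia).
  assert (Hhalf : 0 < rsum_ft ((t + 1) / 2) t alpha).
  { apply rsum_ft_pos; [apply Nat.div_le_lower_bound; lia| exact Hht| exact Hpos]. }
  assert (Hmono : rsum_ft ((t + 1) / 2) t alpha <= rsum_ft (tprime t) t alpha).
  { apply rsum_ft_start_mono; [exact Ha1| exact Hh| lia| intros; left; auto]. }
  assert (H1 := HCa t Ht).
  assert (0 < rsum_ft 1 t alpha) by (apply rsum_ft_pos; auto).
  assert (HCa0 : 0 < Ca) by nra.
  nra.
Qed.

Lemma gap_bound_general_stepsize (n d : nat) (f : nat -> vec -> R) (L : R) (Om : vec -> Prop)
    (D : R) (xstar : vec) (W : nat -> nat -> R) (sigma : R) (alpha : nat -> R)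
    (Ca Ca' amax : R) (x g P : nat -> nat -> vec) (t : nat) :
  standing n d f L Om D xstar W sigma ->
  stepsize_ok alpha ->
  (forall s, (1 <= s)%nat -> rsum_ft 1 s alpha <= Ca * rsum_ft ((s + 1) / 2) s alpha) ->
  (forall s, (2 <= s)%nat -> alpha (s / 2)%nat <= Ca' * alpha s) ->
  is_max_step alpha amax ->
  dsgd_run n d f Om W alpha x g P ->
  (1 <= t)%nat ->
  (exists S, tail_sq alpha (tprime t) S /\ S <= D ^ 2 * (1 - sigma) / (10 * Ca' * L ^ 2)) ->
  INR t >= 6 / (1 - sigma) * ln ((1 - sigma) * INR t * amax / (Ca' * alpha t)) ->
  Favg n f (xprime n alpha x t) - Favg n f xstar <= D ^ 2 * Ca / rsum_ft 1 t alpha.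
Proof.
  intros Hst [Hpos [Hmono _]] HCa HCa' [Hmax _] Hrun Ht [S [HS HSb]] Hcond.
  assert (Hw := weighted_gap_bound n d f L Om D xstar W sigma alpha x g P Hst Hrun Hpos
                  Ca' amax Hmono HCa' Hmax t Ht Hcond).
  assert (HC1 : 1 <= Ca') by (eapply Ca'_ge1; eauto).
  assert (Hs1 : sigma < 1) by (eapply sigma_lt1; eauto).
  assert (Hs0 : 0 <= sigma) by (eapply sigma_nonneg; eauto).
  destruct (tprime_bounds t Ht) as [Ha1 Hat].
  set (Q := rsum_ft (tprime t) t alpha) in *.
  set (T := rsum_ft (tprime t) t (fun k => alpha k ^ 2)) in *.
  assert (HT := window_sq_le_tail alpha (tprime t) t S Hat HS). fold T in HT.
  assert (HT0 : 0 <= T) by (unfold T, rsum_ft; apply rsum_nonneg; intros; apply pow2_ge_0).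
  assert (HQ : 0 < Q) by (apply rsum_ft_pos; auto).
  assert (HG : Favg n f (xprime n alpha x t) - Favg n f xstar <= D ^ 2 / Q).
  { apply (le_div_of_mul_le Q); [lra| apply pow2_ge_0|].
    eapply Rle_trans; [exact Hw| apply (tail_budget _ _ _ _ _ S); auto]. }
  assert (HQ1 := window_ge_total alpha Ca t Hpos HCa Ht). fold Q in HQ1.
  eapply Rle_trans; [exact HG|].
  apply Rdiv_le_cross; [exact HQ| apply rsum_ft_pos; auto|].
  assert (0 <= D ^ 2) by apply pow2_ge_0. nra.
Qed.

Section PowerStepsize.
Variables (beta : R) (alpha : nat -> R).
Hypotheses (Hb : 1 / 2 < beta < 1) (Hal : forall s, (1 <= s)%nat -> alpha s = / Rpower (INR s) beta).

Lemma powstep_pos s : (1 <= s)%nat -> 0 < alpha s.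
Proof. intros. rewrite Hal by auto. apply Rinv_0_lt_compat, Rpower_pos. Qed.

Lemma powstep_antimono a b : (1 <= a)%nat -> (a <= b)%nat -> alpha b <= alpha a.
Proof.
  intros Ha Hab. rewrite !Hal by lia. apply Rinv_le_contravar; [apply Rpower_pos|].
  apply Rle_Rpower_l; [lra|]. split; [apply lt_0_INR; lia| apply le_INR; auto].
Qed.

Lemma powstep_mono t : (1 <= t)%nat -> alpha (S t) <= alpha t.
Proof. intros. apply powstep_antimono; lia. Qed.

Lemma powstep_le1 s : (1 <= s)%nat -> alpha s <= 1.
Proof.
  intros Hs. assert (H := powstep_antimono 1 s (le_n 1) Hs). rewrite (Hal 1%nat) in H by lia.
  replace (INR 1) with 1 in H by reflexivity.
  unfold Rpower in H. rewrite ln_1, Rmult_0_r, exp_0, Rinv_1 in H. auto.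
Qed.

Lemma powstep_half_le s : (2 <= s)%nat -> alpha (s / 2)%nat <= Rpower 3 beta * alpha s.
Proof.
  intros Hs. assert (Hh : (1 <= s / 2)%nat) by (apply (Nat.div_le_lower_bound s 2); lia).
  rewrite !Hal by lia.
  assert (Hh0 : 0 < INR (s / 2)) by (apply lt_0_INR; lia).
  assert (Hs0 : 0 < INR s) by (apply lt_0_INR; lia).
  assert (H3 : INR s <= 3 * INR (s / 2)).
  { replace 3 with (INR 3) by (simpl; ring). rewrite <- mult_INR. apply le_INR.
    assert (E1 := Nat.div_mod s 2 ltac:(lia)). assert (E2 := Nat.mod_upper_bound s 2 ltac:(lia)).
    lia. }
  assert (Hp : Rpower (INR s) beta <= Rpower 3 beta * Rpower (INR (s / 2)) beta).
  { rewrite Rpower_mult_distr by lra. apply Rle_Rpower_l; lra. }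
  assert (0 < Rpower (INR s) beta) by apply Rpower_pos.
  assert (0 < Rpower (INR (s / 2)) beta) by apply Rpower_pos.
  assert (0 < Rpower 3 beta) by apply Rpower_pos.
  apply Rmult_le_reg_r with (Rpower (INR s) beta * Rpower (INR (s / 2)) beta); [nra|].
  replace (/ Rpower (INR (s / 2)) beta * (Rpower (INR s) beta * Rpower (INR (s / 2)) beta)) with (Rpower (INR s) beta)
    by (field; lra).
  replace (Rpower 3 beta * / Rpower (INR s) beta * (Rpower (INR s) beta * Rpower (INR (s / 2)) beta))
    with (Rpower 3 beta * Rpower (INR (s / 2)) beta) by (field; lra).
  auto.
Qed.

Lemma powstep_sq k : (1 <= k)%nat -> alpha k ^ 2 = / Rpower (INR k) (2 * beta).
Proof.
  intros Hk. rewrite Hal by auto. replace (2 * beta) with (beta + beta) by ring.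
  rewrite Rpower_plus.
  assert (0 < Rpower (INR k) beta) by apply Rpower_pos. field. lra.
Qed.

(* [sum_(k >= a) k^(-2 beta) <= 2 beta / (2 beta - 1) * a^(1 - 2 beta)], applied at [a = t' >= t / 3]. *)
Definition powstep_K := 2 * beta / (2 * beta - 1) * Rpower 3 (2 * beta - 1).

Lemma powstep_window_sq_le t : (1 <= t)%nat ->
  rsum_ft (tprime t) t (fun k => alpha k ^ 2) <= powstep_K * Rpower (INR t) (1 - 2 * beta).
Proof.
  intros Ht. assert (Htp := tprime_bounds t Ht). set (a := tprime t) in *.
  set (gm := 2 * beta). assert (Hg : 1 < gm) by (unfold gm; lra).
  rewrite rsum_ft_first by lia.
  assert (Ha0 : 0 < INR a) by (apply lt_0_INR; lia).
  assert (Ha1 : 1 <= INR a) by (replace 1 with (INR 1) by reflexivity; apply le_INR; lia).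
  assert (E1 : rsum_ft (S a) t (fun k => alpha k ^ 2) = rsum (fun i => / Rpower (INR (a + 1 + i)) gm) (S t - S a)).
  { unfold rsum_ft. apply rsum_ext. intros i Hi. rewrite powstep_sq by lia. unfold gm. do 3 f_equal. lia. }
  rewrite E1, powstep_sq by lia. fold gm.
  assert (Hts := rsum_inv_Rpower_le gm a (S t - S a) Hg ltac:(lia)).
  assert (0 < Rpower (INR (a + (S t - S a))) (1 - gm)) by apply Rpower_pos.
  assert (Hfirst : / Rpower (INR a) gm <= Rpower (INR a) (1 - gm)).
  { rewrite <- Rpower_Ropp. apply Rle_Rpower; auto. lra. }
  assert (Hsum : / Rpower (INR a) gm + rsum (fun i => / Rpower (INR (a + 1 + i)) gm) (S t - S a) <=
                 Rpower (INR a) (1 - gm) * (gm / (gm - 1))).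
  { replace (Rpower (INR a) (1 - gm) * (gm / (gm - 1))) with
      (Rpower (INR a) (1 - gm) + Rpower (INR a) (1 - gm) / (gm - 1)) by (field; lra).
    apply Rplus_le_compat; auto. eapply Rle_trans; [exact Hts|].
    unfold Rdiv. apply Rmult_le_compat_r; [left; apply Rinv_0_lt_compat; lra| lra]. }
  eapply Rle_trans; [exact Hsum|].
  assert (Ht0 : 0 < INR t) by (apply lt_0_INR; lia).
  assert (Hat : INR t / 3 <= INR a).
  { assert (Hn : (t <= 3 * a)%nat).
    { unfold a, tprime. assert (E1' := Nat.div_mod t 2 ltac:(lia)). assert (E2 := Nat.mod_upper_bound t 2 ltac:(lia)).
      assert (Hm := Nat.le_max_l 1 (t / 2)). assert (Hm2 := Nat.le_max_r 1 (t / 2)). lia. }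
    apply le_INR in Hn. rewrite mult_INR in Hn. replace (INR 3) with 3 in Hn by (simpl; ring). lra.
    }
  assert (Hpa : Rpower (INR a) (1 - gm) <= Rpower (INR t / 3) (1 - gm)).
  { apply Rpower_le_base_nonpos; [lra| auto| lra]. }
  assert (Ediv : Rpower (INR t / 3) (1 - gm) = Rpower (INR t) (1 - gm) * Rpower 3 (gm - 1)).
  { unfold Rpower. rewrite <- exp_plus. f_equal. unfold Rdiv. rewrite ln_mult, ln_Rinv by lra. ring. }
  assert (0 < gm / (gm - 1)) by (apply Rdiv_lt_0_compat; lra).
  eapply Rle_trans; [apply Rmult_le_compat_r; [lra| exact Hpa]|].
  rewrite Ediv. unfold powstep_K. fold gm. right.
  replace (1 - gm) with (1 - 2 * beta) by reflexivity. ring.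
Qed.

Lemma powstep_window_ge t : (1 <= t)%nat ->
  INR t / 2 * / Rpower (INR t) beta <= rsum_ft (tprime t) t alpha.
Proof.
  intros Ht. assert (Htp := tprime_bounds t Ht). set (a := tprime t) in *.
  unfold rsum_ft.
  assert (H : rsum (fun _ => / Rpower (INR t) beta) (S t - a) <= rsum (fun k => alpha (a + k)%nat) (S t - a)).
  { apply rsum_le. intros i Hi. rewrite <- Hal by lia. apply powstep_antimono; lia. }
  rewrite rsum_const in H.
  assert (Hn : (t <= 2 * (S t - a))%nat).
  { unfold a, tprime. assert (E2 := Nat.div_mod t 2 ltac:(lia)). assert (E3 := Nat.mod_upper_bound t 2 ltac:(lia)).
    assert (Hm := Nat.le_max_l 1 (t / 2)). assert (Hm2 := Nat.le_max_r 1 (t / 2)). lia. }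
  apply le_INR in Hn. rewrite mult_INR in Hn. replace (INR 2) with 2 in Hn by (simpl; ring).
  assert (0 < / Rpower (INR t) beta) by (apply Rinv_0_lt_compat, Rpower_pos).
  assert (INR t / 2 <= INR (S t - a)) by lra.
  eapply Rle_trans; [|exact H]. apply Rmult_le_compat_r; lra.
Qed.

End PowerStepsize.

Lemma powstep_K_pos beta : 1 / 2 < beta -> 0 < powstep_K beta.
Proof.
  intros Hb. unfold powstep_K.
  apply Rmult_lt_0_compat; [apply Rdiv_lt_0_compat; lra| apply Rpower_pos].
Qed.
Lemma power_budget D L sigma c3 K T u : 0 <= sigma < 1 -> 0 < c3 -> 0 < K ->
  T <= K * u -> L ^ 2 * u <= D ^ 2 * (1 - sigma) ->
  D ^ 2 / 2 + L ^ 2 * (1 / 2 + 2 * c3 / (1 - sigma)) * T <= D ^ 2 * (1 + K + 4 * c3 * K) / 2.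
Proof.
  intros Hs Hc HK HT HL.
  assert (HD : 0 <= D ^ 2) by apply pow2_ge_0.
  assert (HL2 : 0 <= L ^ 2) by apply pow2_ge_0.
  assert (Hy : L ^ 2 * T <= K * (D ^ 2 * (1 - sigma))).
  { apply Rle_trans with (K * (L ^ 2 * u)); [|apply Rmult_le_compat_l; lra].
    replace (K * (L ^ 2 * u)) with (L ^ 2 * (K * u)) by ring.
    apply Rmult_le_compat_l; lra. }
  assert (H2 : L ^ 2 * T / (1 - sigma) <= K * D ^ 2).
  { apply Rmult_le_reg_r with (1 - sigma); [lra|].
    replace (L ^ 2 * T / (1 - sigma) * (1 - sigma)) with (L ^ 2 * T) by (field; lra). nra. }
  replace (L ^ 2 * (1 / 2 + 2 * c3 / (1 - sigma)) * T)
    with (L ^ 2 * T / 2 + 2 * c3 * (L ^ 2 * T / (1 - sigma))) by (field; lra).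
  assert (K * (D ^ 2 * (1 - sigma)) <= K * D ^ 2) by (apply Rmult_le_compat_l; nra).
  assert (2 * c3 * (L ^ 2 * T / (1 - sigma)) <= 2 * c3 * (K * D ^ 2)) by (apply Rmult_le_compat_l; lra).
  lra.
Qed.

Lemma Rpower_one_minus x e : 0 < x -> Rpower x (1 - e) = x * / Rpower x e.
Proof.
  intros Hx. replace (1 - e) with (1 + - e) by ring.
  rewrite Rpower_plus, Rpower_1, Rpower_Ropp by lra. reflexivity.
Qed.

Lemma power_condition_budget D L sigma x beta : 0 < D ^ 2 * (1 - sigma) -> 0 < x ->
  Rpower x (2 * beta - 1) >= 1 * (L ^ 2 / (D ^ 2 * (1 - sigma))) ->
  L ^ 2 * Rpower x (1 - 2 * beta) <= D ^ 2 * (1 - sigma).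
Proof.
  intros HD Hx Hcb.
  set (u := Rpower x (1 - 2 * beta)).
  assert (Huv : u * Rpower x (2 * beta - 1) = 1).
  { unfold u. rewrite <- Rpower_plus. replace (1 - 2 * beta + (2 * beta - 1)) with 0 by ring.
    apply Rpower_O; lra. }
  assert (Hu : 0 < u) by apply Rpower_pos.
  rewrite Rmult_1_l in Hcb.
  apply Rmult_ge_compat_l with (r := u) in Hcb; [|lra]. rewrite Huv in Hcb.
  apply Rmult_le_reg_r with (/ (D ^ 2 * (1 - sigma))); [apply Rinv_0_lt_compat; lra|].
  rewrite Rinv_r by lra. unfold Rdiv in Hcb. lra.
Qed.

Lemma gap_bound_power_stepsize (beta : R) (n d : nat) (f : nat -> vec -> R) (L : R)
    (Om : vec -> Prop) (D : R) (xstar : vec) (W : nat -> nat -> R) (sigma : R)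
    (alpha : nat -> R) (x g P : nat -> nat -> vec) (t : nat) :
  1 / 2 < beta < 1 ->
  standing n d f L Om D xstar W sigma ->
  (forall s, (1 <= s)%nat -> alpha s = / Rpower (INR s) beta) ->
  dsgd_run n d f Om W alpha x g P ->
  (1 <= t)%nat ->
  INR t >= 6 / (1 - sigma) * ln ((1 - sigma) * INR t * 1 / (Rpower 3 beta * alpha t)) ->
  Rpower (INR t) (2 * beta - 1) >= 1 * (L ^ 2 / (D ^ 2 * (1 - sigma))) ->
  Favg n f (xprime n alpha x t) - Favg n f xstar <=
  (1 + powstep_K beta + 4 * Rpower 3 beta * powstep_K beta) * (D ^ 2 / Rpower (INR t) (1 - beta)).
Proof.
  intros Hb Hst Hal Hrun Ht Hcond Hcb.
  assert (Hpos := powstep_pos beta alpha Hal).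
  assert (Hw := weighted_gap_bound n d f L Om D xstar W sigma alpha x g P Hst Hrun Hpos
    (Rpower 3 beta) 1 (powstep_mono beta alpha Hb Hal) (powstep_half_le beta alpha Hb Hal)
    (powstep_le1 beta alpha Hb Hal) t Ht Hcond).
  assert (Hs1 : sigma < 1) by (eapply sigma_lt1; eauto).
  assert (Hs0 : 0 <= sigma) by (eapply sigma_nonneg; eauto).
  assert (Ht0 : 0 < INR t) by (apply lt_0_INR; lia).
  assert (HK := powstep_K_pos beta (proj1 Hb)).
  assert (H3 : 0 < Rpower 3 beta) by apply Rpower_pos.
  set (K := powstep_K beta) in *. set (c3 := Rpower 3 beta) in *.
  set (tb := Rpower (INR t) beta).
  assert (Htb : 0 < tb) by apply Rpower_pos.
  rewrite Rpower_one_minus by exact Ht0. fold tb.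
  (* For [D = 0] the last hypothesis is void ([/ 0] is [0]), but [Om] is a point. *)
  destruct (Req_dec D 0) as [HD0|HD0].
  { assert (H := gap_le_L_D n d f L Om D xstar W sigma alpha x g P Hst Hrun Hpos t Ht).
    rewrite HD0, Rmult_0_r in H. rewrite HD0. unfold Rdiv.
    rewrite pow_i, !Rmult_0_l, Rmult_0_r by lia.
    exact H. }
  assert (HD2 : 0 < D ^ 2) by (assert (0 < D * D) by (apply Rsqr_pos_lt; exact HD0); nra).
  set (u := Rpower (INR t) (1 - 2 * beta)).
  assert (HLu : L ^ 2 * u <= D ^ 2 * (1 - sigma)) by (apply power_condition_budget; nra).
  assert (HT := powstep_window_sq_le beta alpha Hb Hal t Ht). fold K u in HT.
  assert (HQ := powstep_window_ge beta alpha Hb Hal t Ht). fold tb in HQ.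
  assert (Hq : 0 < INR t / 2 * / tb) by (apply Rmult_lt_0_compat; [lra| apply Rinv_0_lt_compat; lra]).
  replace ((1 + K + 4 * c3 * K) * (D ^ 2 / (INR t * / tb)))
    with (D ^ 2 * (1 + K + 4 * c3 * K) / 2 / (INR t / 2 * / tb)) by (field; lra).
  apply (le_div_of_mul_le (rsum_ft (tprime t) t alpha)); [lra| |].
  - apply Rle_mult_inv_pos; [|lra]. apply Rmult_le_pos; [lra|]. nra.
  - eapply Rle_trans; [exact Hw| apply (power_budget _ _ _ _ _ _ u); auto].
Qed.

Theorem theorem1 :
  exists c : R, 0 < c /\
  (forall (n d : nat) (f : nat -> vec -> R) (L : R) (Om : vec -> Prop) (D : R)
     (xstar : vec) (W : nat -> nat -> R) (sigma : R) (alpha : nat -> R)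
     (Ca Ca' amax : R) (x g P : nat -> nat -> vec) (t : nat),
     standing n d f L Om D xstar W sigma ->
     stepsize_ok alpha ->
     (forall s, (1 <= s)%nat -> rsum_ft 1 s alpha <= Ca * rsum_ft ((s + 1) / 2) s alpha) ->
     (forall s, (2 <= s)%nat -> alpha (s / 2)%nat <= Ca' * alpha s) ->
     is_max_step alpha amax ->
     dsgd_run n d f Om W alpha x g P ->
     (1 <= t)%nat ->
     (exists S, tail_sq alpha (tprime t) S /\
                S <= D ^ 2 * (1 - sigma) / (10 * Ca' * L ^ 2)) ->
     INR t >= c / (1 - sigma) * ln ((1 - sigma) * INR t * amax / (Ca' * alpha t)) ->
     Favg n f (xprime n alpha x t) - Favg n f xstar <= D ^ 2 * Ca / rsum_ft 1 t alpha)
  /\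
  (forall beta : R, 1 / 2 < beta < 1 ->
   exists cb Cb : R, 0 < cb /\ 0 < Cb /\
   forall (n d : nat) (f : nat -> vec -> R) (L : R) (Om : vec -> Prop) (D : R)
     (xstar : vec) (W : nat -> nat -> R) (sigma : R) (alpha : nat -> R)
     (x g P : nat -> nat -> vec) (t : nat),
     standing n d f L Om D xstar W sigma ->
     (forall s, (1 <= s)%nat -> alpha s = / Rpower (INR s) beta) ->
     dsgd_run n d f Om W alpha x g P ->
     (1 <= t)%nat ->
     INR t >= c / (1 - sigma) * ln ((1 - sigma) * INR t * 1 / (Rpower 3 beta * alpha t)) ->
     Rpower (INR t) (2 * beta - 1) >= cb * (L ^ 2 / (D ^ 2 * (1 - sigma))) ->
     Favg n f (xprime n alpha x t) - Favg n f xstar <= Cb * (D ^ 2 / Rpower (INR t) (1 - beta))).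
Proof.
  exists 6. split; [lra|]. split.
  - intros. eapply gap_bound_general_stepsize; eauto.
  - intros beta Hb.
    assert (HK := powstep_K_pos beta (proj1 Hb)).
    assert (H3 : 0 < Rpower 3 beta) by apply Rpower_pos.
    exists 1, (1 + powstep_K beta + 4 * Rpower 3 beta * powstep_K beta).
    split; [lra| split; [nra|]].
    intros. eapply gap_bound_power_stepsize; eauto.
Qed.
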